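(* Let $\Gamma$ be a regular $N\times 2$ potential game. Define $F:\mathbb{R}^N\supset\Delta\to\mathbb{R}^N$ by $F(x)=\widehat{BR}^\lambda(x)-x$, the right-hand side of the smoothed best-response dynamics $\dot{x}=\widehat{BR}^\lambda(x)-x$. Then there exists $\lambda_0>0$ such that, for all $\lambda\in(0,\lambda_0)$: - every Nash distribution $x^\lambda\in\mathrm{ND}(\lambda)$ is hyperbolic, i.e. the Jacobian $DF(x^\lambda)$ is nonsingular; - a Nash distribution is linearly stable, i.e. all eigenvalues of $DF(x^\lambda)$ have negative real part, if and only if it is a pure-strategy Nash distribution.
   Context: An $N\times 2$ game has players $i=1,\dots,N$, each with action set $A_i=\{a_i^1,a_i^2\}$, and utilities $u_i:A_1\times\cdots\times A_N\to\mathbb{R}$. It is a potential game with potential $u:A_1\times\cdots\times A_N\to\mathbb{R}$ if $u(a_i,a_{-i})-u(a_i',a_{-i})=u_i(a_i,a_{-i})-u_i(a_i',a_{-i})$ for all $i$, all $a_i,a_i'\in A_i$ and all $a_{-i}$. A mixed strategy of player $i$ is a number $x_i\in[0,1]$, the probability of playing $a_i^1$. Joint mixed strategies form $\Delta=[0,1]^N$. The multilinear extension of the potential is $$U(x)=\sum_{k_1,\dots,k_N\in\{1,2\}} z_1^{k_1}(x_1)\cdots z_N^{k_N}(x_N)\,u(a_1^{k_1},\dots,a_N^{k_N}),$$ where $z_i^1(x_i)=x_i$ and $z_i^2(x_i)=1-x_i$. We write $U(a_i^k,x_{-i})$ for the value of $U$ when player $i$ plays $a_i^k$ with probability 1 and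 the others play $x_{-i}$. The set of Nash equilibria is $\mathrm{NE}=\{x\in\Delta: U(x_i,x_{-i})\ge U(x_i',x_{-i})\ \text{for all } i \text{ and all } x_i'\in[0,1]\}$. For $\lambda>0$, the logit (smoothed) best response is $$\widehat{BR}^\lambda_i(x)=\frac{\exp(U(a_i^1,x_{-i})/\lambda)}{\sum_{k=1,2}\exp(U(a_i^k,x_{-i})/\lambda)},\qquad \widehat{BR}^\lambda(x)=(\widehat{BR}^\lambda_1(x),\dots,\widehat{BR}^\lambda_N(x)).$$ The set of Nash distributions is $\mathrm{ND}(\lambda)=\{x\in\Delta: x=\widehat{BR}^\lambda(x)\}$. Regularity. Let $x^*\in\mathrm{NE}$, and relabel each player's two actions so that $x_i^*>0$ for all $i$; thus each player either mixes ($0<x_i^*<1$) or plays $a_i^1$ purely ($x_i^*=1$). - $x^*$ is quasi-strict if, for every $i$ with $x_i^*=1$, the action $a_i^2$ is not a best response to $x_{-i}^*$, i.e. $U(a_i^1,x^*_{-i})>U(a_i^2,x^*_{-i})$. - Let the mixing players be $i=1,\dots,\tilde N$ after reordering. The restricted Hessian relative to $x^*$ is the $\tilde N\times\tilde N$ matrix $H(x)=\big(\partial^2 U(x)/\partial x_i\partial x_j\big)_{i,j=1,\dots,\tilde N}$, which may be evaluated at any $x\in\Delta$. - $x^*$ is regular if it is quasi-strict and $H(x^* )$ is invertible. - The potential game is regular if every Nash equilibrium is regular. Fact used (valid in regular potential games): $\mathrm{NE}$ is finite, and there exists $\lambda_1>0$ such that, for each $x^*\in\mathrm{NE}$, there is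 a continuous branch $\lambda\mapsto x^\lambda(x^* )\in\mathrm{ND}(\lambda)$ on $(0,\lambda_1)$ with $x^\lambda(x^* )\to x^*$ as $\lambda\to0$. For each $\lambda\in(0,\lambda_1)$ these branches are pairwise distinct and exhaust $\mathrm{ND}(\lambda)$. A Nash distribution is called a pure-strategy Nash distribution if it lies on the branch of a pure-strategy Nash equilibrium $x^*\in\{0,1\}^N$, i.e. it converges to a pure Nash equilibrium as $\lambda\to0$. *)

From Stdlib Require Import Reals Lra Lia Arith.
Open Scope R_scope.

(* Players are indexed by 0..N-1.  A pure action profile is a map
   nat -> bool (true = action a_i^1, false = a_i^2); only the coordinates
   < N are meaningful.  A joint mixed strategy is a map x : nat -> R,
   x i = probability that player i plays a_i^1 (coordinates < N meaningful). *)

Definition upd_prof (a : nat -> bool) (i : nat) (b : bool) : nat -> bool :=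
  fun j => if Nat.eqb j i then b else a j.

Definition upd (x : nat -> R) (i : nat) (t : R) : nat -> R :=
  fun j => if Nat.eqb j i then t else x j.

Fixpoint fsum (n : nat) (f : nat -> R) : R :=
  match n with
  | O => 0
  | S m => fsum m f + f m
  end.

(* Multilinear extension of f over the first n coordinates:
   sum over all (k_0..k_{n-1}) of prod z_i^{k_i}(x_i) * f(profile);
   coordinates >= n are set to 'true' (irrelevant). *)
Fixpoint mlext (n : nat) (f : (nat -> bool) -> R) (x : nat -> R) : R :=
  match n with
  | O => f (fun _ => true)
  | S m => x m * mlext m (fun a => f (upd_prof a m true)) x
           + (1 - x m) * mlext m (fun a => f (upd_prof a m false)) x
  end.

Definition is_potential (N : nat) (u : nat -> (nat -> bool) -> R)
  (pot : (nat -> bool) -> R) : Prop :=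
  forall (i : nat) (a : nat -> bool) (b c : bool), (i < N)%nat ->
    pot (upd_prof a i b) - pot (upd_prof a i c)
    = u i (upd_prof a i b) - u i (upd_prof a i c).

Definition Uext (N : nat) (pot : (nat -> bool) -> R) (x : nat -> R) : R :=
  mlext N pot x.

Definition in_Delta (N : nat) (x : nat -> R) : Prop :=
  forall i, (i < N)%nat -> 0 <= x i <= 1.

Definition veq (N : nat) (x y : nat -> R) : Prop :=
  forall i, (i < N)%nat -> x i = y i.

Definition is_NE (N : nat) (pot : (nat -> bool) -> R) (x : nat -> R) : Prop :=
  in_Delta N x /\
  forall i t, (i < N)%nat -> 0 <= t <= 1 ->
    Uext N pot x >= Uext N pot (upd x i t).

Definition is_pure (N : nat) (x : nat -> R) : Prop :=
  forall i, (i < N)%nat -> x i = 0 \/ x i = 1.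

Definition partial_at (f : (nat -> R) -> R) (i : nat) (x : nat -> R) (l : R)
  : Prop :=
  derivable_pt_lim (fun t => f (upd x i t)) (x i) l.

Definition second_partial (f : (nat -> R) -> R) (i j : nat) (x : nat -> R)
  (l : R) : Prop :=
  exists g : (nat -> R) -> R,
    (forall y, partial_at f j y (g y)) /\ partial_at g i x l.

Definition mixing (N : nat) (x : nat -> R) (i : nat) : Prop :=
  (i < N)%nat /\ 0 < x i < 1.

(* Quasi-strictness, stated without relabeling: a player playing a pure
   action plays it as a strict best response. *)
Definition quasi_strict (N : nat) (pot : (nat -> bool) -> R) (x : nat -> R)
  : Prop :=
  forall i, (i < N)%nat ->
    (x i = 1 -> Uext N pot (upd x i 1) > Uext N pot (upd x i 0)) /\
    (x i = 0 -> Uext N pot (upd x i 0) > Uext N pot (upd x i 1)).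

(* The restricted Hessian (rows/columns of mixing players) at x is invertible
   (as a linear map on R^{mixing players}: trivial kernel). *)
Definition restricted_hessian_invertible (N : nat) (pot : (nat -> bool) -> R)
  (x : nat -> R) : Prop :=
  exists H : nat -> nat -> R,
    (forall i j, mixing N x i -> mixing N x j ->
       second_partial (Uext N pot) i j x (H i j)) /\
    (forall v : nat -> R,
       (forall j, (j < N)%nat -> ~ mixing N x j -> v j = 0) ->
       (forall i, mixing N x i -> fsum N (fun j => H i j * v j) = 0) ->
       forall i, (i < N)%nat -> v i = 0).

Definition regular_NE (N : nat) (pot : (nat -> bool) -> R) (x : nat -> R)
  : Prop :=
  quasi_strict N pot x /\ restricted_hessian_invertible N pot x.

Definition regular_potential_game (N : nat) (pot : (nat -> bool) -> R)
  : Prop :=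
  forall x, is_NE N pot x -> regular_NE N pot x.

Definition BR (N : nat) (pot : (nat -> bool) -> R) (lam : R) (x : nat -> R)
  (i : nat) : R :=
  exp (Uext N pot (upd x i 1) / lam) /
  (exp (Uext N pot (upd x i 1) / lam) + exp (Uext N pot (upd x i 0) / lam)).

Definition is_ND (N : nat) (pot : (nat -> bool) -> R) (lam : R) (x : nat -> R)
  : Prop :=
  in_Delta N x /\ forall i, (i < N)%nat -> x i = BR N pot lam x i.

Definition Fdyn (N : nat) (pot : (nat -> bool) -> R) (lam : R) (x : nat -> R)
  (i : nat) : R :=
  BR N pot lam x i - x i.

Definition is_jacobian (N : nat) (pot : (nat -> bool) -> R) (lam : R)
  (x : nat -> R) (J : nat -> nat -> R) : Prop :=
  forall i j, (i < N)%nat -> (j < N)%nat ->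
    partial_at (fun y => Fdyn N pot lam y i) j x (J i j).

Definition nonsingular (N : nat) (J : nat -> nat -> R) : Prop :=
  forall v : nat -> R,
    (forall i, (i < N)%nat -> fsum N (fun j => J i j * v j) = 0) ->
    forall i, (i < N)%nat -> v i = 0.

(* a + i b is a (complex) eigenvalue of J: there is a nonzero complex
   eigenvector u + i w, written in real and imaginary parts. *)
Definition is_eigenvalue (N : nat) (J : nat -> nat -> R) (a b : R) : Prop :=
  exists u w : nat -> R,
    (exists i, (i < N)%nat /\ (u i <> 0 \/ w i <> 0)) /\
    forall i, (i < N)%nat ->
      fsum N (fun j => J i j * u j) = a * u i - b * w i /\
      fsum N (fun j => J i j * w j) = b * u i + a * w i.

Definition linearly_stable (N : nat) (J : nat -> nat -> R) : Prop :=
  forall a b, is_eigenvalue N J a b -> a < 0.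

(* A system of branches as provided by the Fact: for each NE xs, a
   continuous branch lam |-> branch xs lam in ND(lam) on (0,lam1) tending to
   xs as lam -> 0; pairwise distinct and exhausting ND(lam). *)
Definition is_branch_system (N : nat) (pot : (nat -> bool) -> R) (lam1 : R)
  (branch : (nat -> R) -> R -> (nat -> R)) : Prop :=
  0 < lam1 /\
  (forall xs, is_NE N pot xs ->
     (forall lam, 0 < lam < lam1 -> is_ND N pot lam (branch xs lam)) /\
     (forall i, (i < N)%nat ->
        (forall l0, 0 < l0 < lam1 ->
           limit1_in (fun l => branch xs l i) (fun l => 0 < l < lam1)
             (branch xs l0 i) l0) /\
        limit1_in (fun l => branch xs l i) (fun l => 0 < l < lam1) (xs i) 0))
  /\
  (forall lam, 0 < lam < lam1 ->
     (forall xs ys, is_NE N pot xs -> is_NE N pot ys -> ~ veq N xs ys ->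
        ~ veq N (branch xs lam) (branch ys lam)) /\
     (forall x, is_ND N pot lam x ->
        exists xs, is_NE N pot xs /\ veq N x (branch xs lam))).

Definition pure_ND (N : nat) (pot : (nat -> bool) -> R)
  (branch : (nat -> R) -> R -> (nat -> R)) (lam : R) (x : nat -> R) : Prop :=
  exists xs, is_NE N pot xs /\ is_pure N xs /\ veq N x (branch xs lam).

From Stdlib Require Import Reals Lra Lia List.
From Stdlib Require Import FunctionalExtensionality Classical ClassicalEpsilon.
From Coquelicot Require Import Coquelicot.
Open Scope R_scope.

(* For small [lam] every Nash distribution is close to a Nash equilibrium, and at a
   Nash distribution the Jacobian is DF = diag(x_i (1 - x_i)) H / lam - I, with H the
   Hessian of the multilinear potential (zero diagonal).

   Near a pure equilibrium, quasi-strictness bounds the gains away from 0, so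
   x_i (1 - x_i) = O(lam^2) and DF is O(lam)-close to -I: it is nonsingular and
   stable. An intermediate value argument along the branches shows that such a Nash
   distribution lies on the branch of that pure equilibrium, while the branch of a pure
   equilibrium never leaves its neighbourhood.

   Near a mixed equilibrium, DF = diag(d) S with S symmetric, and invertibility of the
   restricted Hessian gives a nonzero entry H_ik between mixing players; the test vector
   H_ik e_i + e_k makes the quadratic form of S positive (of order 1 / lam), so the top of
   the Rayleigh quotient of S is an eigenvector of DF with positive eigenvalue.
   Nonsingularity follows because limits of normalised kernel vectors of DF lie in the
   kernel of the restricted Hessian. Both statements near mixed equilibria are obtained
   by compactness along sequences lam_k -> 0. *)

Lemma upd_same x i t : upd x i t i = t.
Proof. unfold upd. now rewrite Nat.eqb_refl. Qed.

Lemma upd_other x i j t : j <> i -> upd x i t j = x j.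
Proof. intros H. unfold upd. destruct (Nat.eqb_spec j i); congruence. Qed.

Lemma upd_upd_same x i a b : upd (upd x i a) i b = upd x i b.
Proof.
  apply functional_extensionality; intro j. unfold upd. now destruct (Nat.eqb j i).
Qed.

Lemma upd_comm x i j a b : i <> j -> upd (upd x i a) j b = upd (upd x j b) i a.
Proof.
  intro H. apply functional_extensionality; intro k. unfold upd.
  destruct (Nat.eqb_spec k j), (Nat.eqb_spec k i); subst; auto; congruence.
Qed.

Lemma upd_id x i : upd x i (x i) = x.
Proof.
  apply functional_extensionality; intro k. unfold upd.
  destruct (Nat.eqb_spec k i); subst; auto.
Qed.

Lemma in_Delta_upd n x i t : in_Delta n x -> 0 <= t <= 1 -> in_Delta n (upd x i t).
Proof. intros H Ht j Hj. unfold upd. destruct (Nat.eqb j i); auto. Qed.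

Lemma in_Delta_S n x : in_Delta (S n) x -> in_Delta n x.
Proof. intros H i Hi; apply H; lia. Qed.

Lemma Rabs_le_inv x a : Rabs x <= a -> - a <= x <= a.
Proof. unfold Rabs. destruct (Rcase_abs x); lra. Qed.

Lemma fsum_ext n f g : (forall i, (i < n)%nat -> f i = g i) -> fsum n f = fsum n g.
Proof. induction n; intros H; simpl; auto. rewrite IHn, H; auto; intros; apply H; lia. Qed.

Lemma fsum_plus n f g : fsum n (fun i => f i + g i) = fsum n f + fsum n g.
Proof. induction n; simpl; [ring|]. rewrite IHn; ring. Qed.

Lemma fsum_minus n f g : fsum n (fun i => f i - g i) = fsum n f - fsum n g.
Proof. induction n; simpl; [ring|]. rewrite IHn; ring. Qed.

Lemma fsum_scal n c f : fsum n (fun i => c * f i) = c * fsum n f.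
Proof. induction n; simpl; [ring|]. rewrite IHn; ring. Qed.

Lemma fsum_const n c : fsum n (fun _ => c) = INR n * c.
Proof. induction n; simpl fsum; [simpl; ring|]. rewrite IHn, S_INR; ring. Qed.

Lemma fsum_zero n f : (forall i, (i < n)%nat -> f i = 0) -> fsum n f = 0.
Proof.
  intros H. rewrite (fsum_ext n f (fun _ => 0)), fsum_const by auto. ring.
Qed.

Lemma fsum_le n f g : (forall i, (i < n)%nat -> f i <= g i) -> fsum n f <= fsum n g.
Proof.
  induction n; intros H; simpl; [lra|].
  assert (fsum n f <= fsum n g) by (apply IHn; intros; apply H; lia).
  specialize (H n ltac:(lia)). lra.
Qed.

Lemma fsum_nonneg n f : (forall i, (i < n)%nat -> 0 <= f i) -> 0 <= fsum n f.
Proof.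
  intros H. rewrite <- (fsum_zero n (fun _ => 0)) by auto. now apply fsum_le.
Qed.

Lemma fsum_term_le n f k :
  (forall i, (i < n)%nat -> 0 <= f i) -> (k < n)%nat -> f k <= fsum n f.
Proof.
  induction n; intros H Hk; simpl; [lia|].
  assert (0 <= fsum n f) by (apply fsum_nonneg; intros; apply H; lia).
  destruct (Nat.eq_dec k n); [subst; lra|].
  assert (f k <= fsum n f) by (apply IHn; intros; [apply H|]; lia).
  specialize (H n ltac:(lia)). lra.
Qed.

Lemma fsum_nonneg_eq0 n f :
  (forall i, (i < n)%nat -> 0 <= f i) -> fsum n f = 0 -> forall i, (i < n)%nat -> f i = 0.
Proof.
  intros H Hs i Hi. pose proof (fsum_term_le n f i H Hi). specialize (H i Hi). lra.
Qed.

Lemma fsum_abs n f : Rabs (fsum n f) <= fsum n (fun i => Rabs (f i)).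
Proof.
  induction n; simpl. rewrite Rabs_R0; lra.
  eapply Rle_trans. apply Rabs_triang. lra.
Qed.

Lemma fsum_delta n i c : (i < n)%nat -> fsum n (fun j => if Nat.eqb j i then c else 0) = c.
Proof.
  induction n; intros H; simpl; [lia|]. destruct (Nat.eqb_spec n i).
  - subst. rewrite fsum_zero; [ring|]. intros j Hj. destruct (Nat.eqb_spec j i); [lia|auto].
  - rewrite IHn by lia. ring.
Qed.

Lemma fsum_kronecker n i v :
  (i < n)%nat -> fsum n (fun j => (if Nat.eqb i j then 1 else 0) * v j) = v i.
Proof.
  intros H. rewrite <- (fsum_delta n i (v i) H). apply fsum_ext; intros j Hj.
  destruct (Nat.eqb_spec i j), (Nat.eqb_spec j i); subst; try ring; congruence.
Qed.

Lemma fsum_abs_pos n v k : (k < n)%nat -> v k <> 0 -> 0 < fsum n (fun j => Rabs (v j)).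
Proof.
  intros Hk Hv. eapply Rlt_le_trans; [apply Rabs_pos_lt, Hv|].
  apply (fsum_term_le n (fun j => Rabs (v j))); auto. intros; apply Rabs_pos.
Qed.

Lemma fsum_abs_eq0 n v : fsum n (fun j => Rabs (v j)) = 0 -> forall i, (i < n)%nat -> v i = 0.
Proof.
  intros H i Hi. destruct (Req_dec (v i) 0); auto.
  pose proof (fsum_abs_pos n v i Hi H0). lra.
Qed.

Lemma fsum_matrix_bound n (A : nat -> nat -> R) B v i :
  (forall j, (j < n)%nat -> Rabs (A i j) <= B) ->
  Rabs (fsum n (fun j => A i j * v j)) <= B * fsum n (fun j => Rabs (v j)).
Proof.
  intros HA. eapply Rle_trans. apply fsum_abs. rewrite <- fsum_scal.
  apply fsum_le; intros j Hj. rewrite Rabs_mult.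
  apply Rmult_le_compat_r. apply Rabs_pos. auto.
Qed.

Definition dist1 (n : nat) (x y : nat -> R) : R := fsum n (fun i => Rabs (x i - y i)).

Lemma dist1_nonneg n x y : 0 <= dist1 n x y.
Proof. apply fsum_nonneg; intros; apply Rabs_pos. Qed.

Lemma dist1_self n x : dist1 n x x = 0.
Proof. apply fsum_zero. intros. rewrite Rminus_diag, Rabs_R0; auto. Qed.

Lemma dist1_veq n x y p : veq n x y -> dist1 n x p = dist1 n y p.
Proof. intros H. apply fsum_ext. intros i Hi. rewrite H; auto. Qed.

Lemma dist1_upd n x y i t : dist1 n (upd x i t) (upd y i t) <= dist1 n x y.
Proof.
  apply fsum_le; intros j _. unfold upd. destruct (Nat.eqb j i); [|lra].
  rewrite Rminus_diag, Rabs_R0. apply Rabs_pos.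
Qed.

Lemma dist1_lip n x y p : Rabs (dist1 n x p - dist1 n y p) <= dist1 n x y.
Proof.
  unfold dist1. rewrite <- fsum_minus. eapply Rle_trans. apply fsum_abs.
  apply fsum_le; intros i _.
  replace (x i - y i) with ((x i - p i) - (y i - p i)) by ring. apply Rabs_triang_inv2.
Qed.

Lemma cv_const c : Un_cv (fun _ => c) c.
Proof. intros e He; exists 0%nat; intros; unfold R_dist; rewrite Rminus_diag, Rabs_R0; lra. Qed.

Lemma fsum_cv n (a : nat -> nat -> R) l :
  (forall j, (j < n)%nat -> Un_cv (fun k => a k j) (l j)) ->
  Un_cv (fun k => fsum n (a k)) (fsum n l).
Proof.
  induction n; intros H; simpl; [apply cv_const|].
  apply CV_plus. apply IHn; intros; apply H; lia. apply H; lia.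
Qed.

Lemma mlext_ext n : forall f x y, (forall i, (i < n)%nat -> x i = y i) -> mlext n f x = mlext n f y.
Proof.
  induction n; intros f x y H; simpl; auto.
  rewrite (IHn _ x y), (IHn (fun a => f (upd_prof a n false)) x y), (H n);
    auto; intros; apply H; lia.
Qed.

Lemma mlext_affine n : forall f x j t, (j < n)%nat ->
  mlext n f (upd x j t) = t * mlext n f (upd x j 1) + (1 - t) * mlext n f (upd x j 0).
Proof.
  induction n; intros f x j t Hj; [lia|]. simpl.
  destruct (Nat.eq_dec j n).
  - subst. rewrite !upd_same.
    assert (Hy : forall s g, mlext n g (upd x n s) = mlext n g x)
      by (intros; apply mlext_ext; intros; apply upd_other; lia).
    rewrite !Hy. ring.
  - rewrite !upd_other by lia.
    rewrite (IHn _ x j t), (IHn (fun a => f (upd_prof a n false)) x j t) by lia. ring.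
Qed.

Lemma mlext_bounded n : forall f, exists M, forall x, in_Delta n x -> Rabs (mlext n f x) <= M.
Proof.
  induction n; intros f; simpl.
  - exists (Rabs (f (fun _ => true))); intros; lra.
  - destruct (IHn (fun a => f (upd_prof a n true))) as [M1 H1].
    destruct (IHn (fun a => f (upd_prof a n false))) as [M2 H2].
    exists (M1 + M2). intros x Hx.
    specialize (H1 x (in_Delta_S _ _ Hx)). specialize (H2 x (in_Delta_S _ _ Hx)).
    specialize (Hx n ltac:(lia)).
    eapply Rle_trans. apply Rabs_triang. rewrite !Rabs_mult.
    rewrite (Rabs_right (x n)), (Rabs_right (1 - x n)) by lra.
    pose proof (Rabs_pos (mlext n (fun a => f (upd_prof a n true)) x)).
    pose proof (Rabs_pos (mlext n (fun a => f (upd_prof a n false)) x)).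
    nra.
Qed.

Lemma bound_nonneg n (F : (nat -> R) -> R) M :
  (forall x, in_Delta n x -> Rabs (F x) <= M) -> 0 <= M.
Proof.
  intros H. eapply Rle_trans; [apply Rabs_pos|apply (H (fun _ => 0))]. intros i _; lra.
Qed.

Lemma mlext_lipschitz n : forall f, exists L, 0 <= L /\ forall x y, in_Delta n x -> in_Delta n y ->
  Rabs (mlext n f x - mlext n f y) <= L * dist1 n x y.
Proof.
  induction n; intros f; simpl.
  - exists 0. split; [lra|]. intros. rewrite Rminus_diag, Rabs_R0. unfold dist1; simpl; lra.
  - set (A := fun a => f (upd_prof a n true)). set (B := fun a => f (upd_prof a n false)).
    destruct (IHn A) as [L1 [HL1 H1]]. destruct (IHn B) as [L2 [HL2 H2]].
    destruct (mlext_bounded n A) as [M1 B1]. destruct (mlext_bounded n B) as [M2 B2].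
    pose proof (bound_nonneg _ _ _ B1). pose proof (bound_nonneg _ _ _ B2).
    exists (L1 + L2 + M1 + M2). split; [lra|]. intros x y Hx Hy.
    pose proof (H1 x y (in_Delta_S _ _ Hx) (in_Delta_S _ _ Hy)) as E1.
    pose proof (H2 x y (in_Delta_S _ _ Hx) (in_Delta_S _ _ Hy)) as E2.
    pose proof (B1 x (in_Delta_S _ _ Hx)) as F1. pose proof (B2 x (in_Delta_S _ _ Hx)) as F2.
    change (dist1 (S n) x y) with (dist1 n x y + Rabs (x n - y n)).
    pose proof (dist1_nonneg n x y). pose proof (Hy n ltac:(lia)).
    replace (x n * mlext n A x + (1 - x n) * mlext n B x - (y n * mlext n A y + (1 - y n) * mlext n B y))
      with ((x n - y n) * (mlext n A x - mlext n B x) + y n * (mlext n A x - mlext n A y)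
            + (1 - y n) * (mlext n B x - mlext n B y)) by ring.
    eapply Rle_trans. apply Rabs_triang.
    eapply Rle_trans. apply Rplus_le_compat_r. apply Rabs_triang.
    rewrite !Rabs_mult. rewrite (Rabs_right (y n)), (Rabs_right (1 - y n)) by lra.
    assert (Rabs (mlext n A x - mlext n B x) <= M1 + M2).
    { unfold Rminus. eapply Rle_trans. apply Rabs_triang. rewrite Rabs_Ropp. lra. }
    pose proof (Rabs_pos (x n - y n)).
    pose proof (Rabs_pos (mlext n A x - mlext n A y)).
    pose proof (Rabs_pos (mlext n B x - mlext n B y)).
    nra.
Qed.

Lemma mlext_pure_values n : forall f, exists l : list R,
  forall p, is_pure n p -> In (mlext n f p) l.
Proof.
  induction n; intros f; simpl.
  - exists (f (fun _ => true) :: nil). intros; simpl; auto.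
  - destruct (IHn (fun a => f (upd_prof a n true))) as [l1 H1].
    destruct (IHn (fun a => f (upd_prof a n false))) as [l2 H2].
    exists (l1 ++ l2). intros p Hp. apply in_or_app.
    assert (Hp' : is_pure n p) by (intros i Hi; apply Hp; lia).
    destruct (Hp n ltac:(lia)) as [E|E]; rewrite E; [right|left].
    + rewrite Rmult_0_l, Rplus_0_l, Rminus_0_r, Rmult_1_l. auto.
    + rewrite Rmult_1_l, Rminus_diag, Rmult_0_l, Rplus_0_r. auto.
Qed.

Lemma mlext_cv n : forall f (s : nat -> nat -> R) x,
  (forall i, (i < n)%nat -> Un_cv (fun k => s k i) (x i)) ->
  Un_cv (fun k => mlext n f (s k)) (mlext n f x).
Proof.
  induction n; intros f s x H; simpl; [apply cv_const|].
  assert (Hn : Un_cv (fun k => s k n) (x n)) by (apply H; lia).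
  apply CV_plus; apply CV_mult; auto using CV_minus, cv_const;
    apply IHn; intros; apply H; lia.
Qed.

Lemma list_min_pos (l : list R) : exists c, 0 < c /\ forall v, In v l -> v <> 0 -> c <= Rabs v.
Proof.
  induction l as [|a l [c [Hc H]]].
  - exists 1; split; [lra|]; intros v [].
  - destruct (Req_dec a 0).
    + exists c; split; auto. intros v [<-|Hv] Hn; [congruence|auto].
    + exists (Rmin c (Rabs a)). split. apply Rmin_pos; auto. apply Rabs_pos_lt; auto.
      intros v [<-|Hv] Hn. apply Rmin_r. eapply Rle_trans. apply Rmin_l. auto.
Qed.

Lemma derivable_pt_lim_affine a b z : derivable_pt_lim (fun t => t * a + (1 - t) * b) z (a - b).
Proof. apply is_derive_Reals. auto_derive; auto. ring. Qed.

Lemma derivable_pt_lim_logit_affine a1 a0 b1 b0 lam z : lam <> 0 ->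
  let s := fun t => exp ((t * a1 + (1 - t) * a0) / lam) /
             (exp ((t * a1 + (1 - t) * a0) / lam) + exp ((t * b1 + (1 - t) * b0) / lam)) in
  derivable_pt_lim s z (s z * (1 - s z) * (a1 - b1 - (a0 - b0)) / lam).
Proof.
  intros Hl s. unfold s. apply is_derive_Reals.
  set (ea := exp ((z * a1 + (1 - z) * a0) / lam)). set (eb := exp ((z * b1 + (1 - z) * b0) / lam)).
  assert (0 < ea) by apply exp_pos. assert (0 < eb) by apply exp_pos.
  auto_derive;
    (replace (exp ((z * a1 + (1 + - z) * a0) * / lam)) with ea by (unfold ea; f_equal; field; auto));
    (replace (exp ((z * b1 + (1 + - z) * b0) * / lam)) with eb by (unfold eb; f_equal; field; auto)).
  - lra.
  - field. split; lra.
Qed.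

Section Game.

Variables (N : nat) (pot : (nat -> bool) -> R).

Notation U := (Uext N pot).

(** [gain i x] = U(a_i^1, x_-i) - U(a_i^2, x_-i) = dU/dx_i, and
    [hess i j x] = d^2U/dx_i dx_j (U being multilinear, both are differences). *)
Definition gain (i : nat) (x : nat -> R) : R := U (upd x i 1) - U (upd x i 0).

Definition hess (i j : nat) (x : nat -> R) : R := gain i (upd x j 1) - gain i (upd x j 0).

Definition jac (lam : R) (x : nat -> R) (i j : nat) : R :=
  x i * (1 - x i) * hess i j x / lam - (if Nat.eqb i j then 1 else 0).

Lemma U_affine x j t : (j < N)%nat -> U (upd x j t) = t * U (upd x j 1) + (1 - t) * U (upd x j 0).
Proof. intros; apply mlext_affine; auto. Qed.

Lemma U_affine_self x j : (j < N)%nat -> U x = x j * U (upd x j 1) + (1 - x j) * U (upd x j 0).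
Proof. intros Hj. rewrite <- U_affine, upd_id; auto. Qed.

Lemma gain_upd_same i x t : gain i (upd x i t) = gain i x.
Proof. unfold gain. now rewrite !upd_upd_same. Qed.

Lemma gain_affine j x i t : (i < N)%nat ->
  gain j (upd x i t) = t * gain j (upd x i 1) + (1 - t) * gain j (upd x i 0).
Proof.
  intros Hi. destruct (Nat.eq_dec i j) as [<-|Hne].
  - rewrite !gain_upd_same. ring.
  - unfold gain. rewrite !(upd_comm x i j) by auto.
    rewrite (U_affine (upd x j 1) i t), (U_affine (upd x j 0) i t) by auto. ring.
Qed.

Lemma hess_diag i x : hess i i x = 0.
Proof. unfold hess. rewrite !gain_upd_same. ring. Qed.

Lemma hess_sym i j x : hess i j x = hess j i x.
Proof.
  destruct (Nat.eq_dec i j); [subst; auto|].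
  unfold hess, gain. rewrite !(upd_comm x j i) by auto. ring.
Qed.

Lemma partial_at_U j y : (j < N)%nat -> partial_at U j y (gain j y).
Proof.
  intros Hj. unfold partial_at, gain.
  replace (fun t => U (upd y j t))
    with (fun t => t * U (upd y j 1) + (1 - t) * U (upd y j 0)).
  - apply derivable_pt_lim_affine.
  - apply functional_extensionality; intro t. symmetry; apply U_affine; auto.
Qed.

Lemma second_partial_U i j x h : (i < N)%nat -> (j < N)%nat ->
  second_partial U i j x h -> h = hess i j x.
Proof.
  intros Hi Hj [g [Hg Hgi]].
  assert (Eg : g = gain j).
  { apply functional_extensionality; intro y.
    eapply uniqueness_limite; [apply Hg|apply partial_at_U; auto]. }
  subst g. unfold partial_at in Hgi.
  replace (fun t => gain j (upd x i t))
    with (fun t => t * gain j (upd x i 1) + (1 - t) * gain j (upd x i 0)) in Hgi.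
  - rewrite hess_sym. eapply uniqueness_limite; [apply Hgi|apply derivable_pt_lim_affine].
  - apply functional_extensionality; intro t; symmetry; apply gain_affine; auto.
Qed.

(** At a Nash distribution, x_i = BR_i(x), which turns the derivative
    BR_i (1 - BR_i) (gain_i)' / lam of the logit map into the entries of [jac]. *)
Lemma jacobian_at_ND lam x J : 0 < lam -> is_ND N pot lam x -> is_jacobian N pot lam x J ->
  forall i j, (i < N)%nat -> (j < N)%nat -> J i j = jac lam x i j.
Proof.
  intros Hl [HD HND] HJ i j Hi Hj. specialize (HJ i j Hi Hj). unfold partial_at, Fdyn in HJ.
  unfold jac. destruct (Nat.eq_dec i j) as [<-|Hne].
  - rewrite Nat.eqb_refl, hess_diag.
    replace (fun t => BR N pot lam (upd x i t) i - upd x i t i)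
      with (fun t => BR N pot lam x i - t) in HJ.
    2:{ apply functional_extensionality; intro t. unfold BR.
        rewrite !upd_upd_same, upd_same. reflexivity. }
    assert (derivable_pt_lim (fun t => BR N pot lam x i - t) (x i) (-1))
      by (apply is_derive_Reals; auto_derive; auto).
    rewrite (uniqueness_limite _ _ _ _ HJ H). field. lra.
  - replace (Nat.eqb i j) with false by (symmetry; apply Nat.eqb_neq; auto).
    set (A1 := U (upd (upd x i 1) j 1)). set (A0 := U (upd (upd x i 1) j 0)).
    set (B1 := U (upd (upd x i 0) j 1)). set (B0 := U (upd (upd x i 0) j 0)).
    set (s := fun t => exp ((t * A1 + (1 - t) * A0) / lam) /
      (exp ((t * A1 + (1 - t) * A0) / lam) + exp ((t * B1 + (1 - t) * B0) / lam))).
    replace (fun t => BR N pot lam (upd x j t) i - upd x j t i) with (fun t => s t - x i) in HJ.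
    2:{ apply functional_extensionality; intro t. unfold BR, s. rewrite upd_other by auto.
        rewrite !(upd_comm x j i) by auto. unfold A1, A0, B1, B0. rewrite <- !U_affine by auto.
        reflexivity. }
    assert (Hxi : x i = s (x j)).
    { rewrite (HND i Hi). unfold BR, s, A1, A0, B1, B0. rewrite <- !U_affine by auto.
      rewrite <- !(upd_comm x j i) by auto. rewrite !upd_id. reflexivity. }
    assert (HG : hess i j x = (A1 - B1) - (A0 - B0)).
    { unfold hess, gain, A1, A0, B1, B0. rewrite !(upd_comm x j i) by auto. reflexivity. }
    assert (Hd : derivable_pt_lim (fun t => s t - x i) (x j)
       (s (x j) * (1 - s (x j)) * (A1 - B1 - (A0 - B0)) / lam)).
    { replace (s (x j) * (1 - s (x j)) * (A1 - B1 - (A0 - B0)) / lam)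
        with (s (x j) * (1 - s (x j)) * (A1 - B1 - (A0 - B0)) / lam - 0) by ring.
      apply derivable_pt_lim_minus; [apply derivable_pt_lim_logit_affine; lra|apply derivable_pt_lim_const]. }
    rewrite HG, Hxi, (uniqueness_limite _ _ _ _ HJ Hd). ring.
Qed.

Lemma NE_gain_sign x i : is_NE N pot x -> (i < N)%nat ->
  (0 < gain i x -> x i = 1) /\ (gain i x < 0 -> x i = 0).
Proof.
  intros [HD HNE] Hi. pose proof (HD i Hi).
  pose proof (HNE i 1 Hi ltac:(lra)). pose proof (HNE i 0 Hi ltac:(lra)).
  rewrite (U_affine_self x i Hi), (U_affine x i 1 Hi), (U_affine x i 0 Hi) in *.
  unfold gain. split; intros Hs; nra.
Qed.

Lemma NE_of_gain_sign x : in_Delta N x ->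
  (forall i, (i < N)%nat -> (0 < gain i x -> x i = 1) /\ (gain i x < 0 -> x i = 0)) ->
  is_NE N pot x.
Proof.
  intros HD Hs. split; auto. intros i t Hi Ht.
  rewrite (U_affine x i t Hi), (U_affine_self x i Hi).
  destruct (Hs i Hi) as [H1 H0]. unfold gain in *.
  destruct (Rtotal_order (U (upd x i 1) - U (upd x i 0)) 0) as [Hn|[Hz|Hp]].
  - rewrite (H0 Hn). nra.
  - nra.
  - rewrite (H1 Hp). nra.
Qed.

Lemma gain_lipschitz : exists L, 0 < L /\ forall i y z, (i < N)%nat -> in_Delta N y -> in_Delta N z ->
  Rabs (gain i y - gain i z) <= L * dist1 N y z.
Proof.
  destruct (mlext_lipschitz N pot) as [L0 [HL0 H]]. exists (2 * L0 + 1). split; [lra|].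
  intros i y z Hi Hy Hz. unfold gain, Uext.
  pose proof (dist1_nonneg N y z).
  pose proof (H (upd y i 1) (upd z i 1) ltac:(apply in_Delta_upd; auto; lra)
                ltac:(apply in_Delta_upd; auto; lra)).
  pose proof (H (upd y i 0) (upd z i 0) ltac:(apply in_Delta_upd; auto; lra)
                ltac:(apply in_Delta_upd; auto; lra)).
  pose proof (Rmult_le_compat_l _ _ _ HL0 (dist1_upd N y z i 1)).
  pose proof (Rmult_le_compat_l _ _ _ HL0 (dist1_upd N y z i 0)).
  revert H1 H2. generalize (mlext N pot (upd y i 1)), (mlext N pot (upd y i 0)),
    (mlext N pot (upd z i 1)), (mlext N pot (upd z i 0)). intros a b c d Ha Hb.
  unfold Rabs in *. repeat destruct Rcase_abs; lra.
Qed.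

Lemma hess_bounded : exists B, 0 <= B /\ forall i j y, in_Delta N y -> Rabs (hess i j y) <= B.
Proof.
  destruct (mlext_bounded N pot) as [M HM]. pose proof (bound_nonneg _ _ _ HM).
  exists (4 * M). split; [lra|]. intros i j y Hy. unfold hess, gain, Uext.
  assert (HD : forall a b, 0 <= a <= 1 -> 0 <= b <= 1 -> Rabs (mlext N pot (upd (upd y j a) i b)) <= M).
  { intros a b Ha Hb. apply HM. apply in_Delta_upd; auto. apply in_Delta_upd; auto. }
  pose proof (HD 1 1 ltac:(lra) ltac:(lra)). pose proof (HD 1 0 ltac:(lra) ltac:(lra)).
  pose proof (HD 0 1 ltac:(lra) ltac:(lra)). pose proof (HD 0 0 ltac:(lra) ltac:(lra)).
  revert H0 H1 H2 H3. generalize (mlext N pot (upd (upd y j 1) i 1)), (mlext N pot (upd (upd y j 1) i 0)),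
    (mlext N pot (upd (upd y j 0) i 1)), (mlext N pot (upd (upd y j 0) i 0)). intros a b c d Ha Hb Hc Hd.
  unfold Rabs in *. repeat destruct Rcase_abs; lra.
Qed.

(** Pure profiles take finitely many values, so nonzero gains there are bounded away from 0. *)
Lemma pure_gain_gap : exists c, 0 < c /\
  forall p i, is_pure N p -> (i < N)%nat -> gain i p <> 0 -> c <= Rabs (gain i p).
Proof.
  destruct (mlext_pure_values N pot) as [l Hl].
  destruct (list_min_pos (flat_map (fun a => map (fun b => a - b) l) l)) as [c [Hc H]].
  exists c. split; auto. intros p i Hp Hi Hn. apply H; auto. unfold gain.
  assert (Hpure : forall t, t = 0 \/ t = 1 -> is_pure N (upd p i t)).
  { intros t Ht j Hj. unfold upd. destruct (Nat.eqb j i); auto. }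
  apply in_flat_map. exists (U (upd p i 1)). split; [apply Hl, Hpure; auto|].
  apply (in_map (fun b => U (upd p i 1) - b)). apply Hl, Hpure; auto.
Qed.

Lemma gain_cv (s : nat -> nat -> R) l i :
  (forall i, (i < N)%nat -> Un_cv (fun k => s k i) (l i)) ->
  Un_cv (fun k => gain i (s k)) (gain i l).
Proof.
  intros H. assert (Hupd : forall j t i, (i < N)%nat -> Un_cv (fun k => upd (s k) j t i) (upd l j t i)).
  { intros j t i' Hi'. unfold upd. destruct (Nat.eqb i' j); auto using cv_const. }
  apply CV_minus; apply mlext_cv; auto.
Qed.

Lemma hess_cv (s : nat -> nat -> R) l i j :
  (forall i, (i < N)%nat -> Un_cv (fun k => s k i) (l i)) ->
  Un_cv (fun k => hess i j (s k)) (hess i j l).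
Proof.
  intros H. assert (Hupd : forall t i, (i < N)%nat -> Un_cv (fun k => upd (s k) j t i) (upd l j t i)).
  { intros t i' Hi'. unfold upd. destruct (Nat.eqb i' j); auto using cv_const. }
  apply CV_minus; apply gain_cv; auto.
Qed.

End Game.

Definition sigmoid (z : R) : R := 1 / (1 + exp (- z)).

Lemma sigmoid_bounds z : 0 < sigmoid z < 1.
Proof.
  unfold sigmoid. pose proof (exp_pos (- z)). split.
  - apply Rdiv_lt_0_compat; lra.
  - apply Rmult_lt_reg_r with (1 + exp (- z)); [lra|].
    unfold Rdiv. rewrite Rmult_assoc, Rinv_l by lra. lra.
Qed.

Lemma one_sub_sigmoid z : 1 - sigmoid z = sigmoid (- z).
Proof.
  unfold sigmoid. rewrite Ropp_involutive, exp_Ropp. pose proof (exp_pos z). field. lra.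
Qed.

Lemma sigmoid_le_inv z : z < 0 -> sigmoid z <= 1 / (- z).
Proof.
  intros Hz. unfold sigmoid. pose proof (exp_ineq1 (- z) ltac:(lra)).
  apply Rmult_le_compat_l; [lra|]. apply Rinv_le_contravar; lra.
Qed.

Lemma one_sub_sigmoid_le_inv z : 0 < z -> 1 - sigmoid z <= 1 / z.
Proof.
  intros Hz. rewrite one_sub_sigmoid. replace (1 / z) with (1 / - - z) by (f_equal; ring).
  apply sigmoid_le_inv. lra.
Qed.

(** From exp z >= 1 + z + z^2/2 >= z^2/4. *)
Lemma sigmoid_le_sq z : z < 0 -> sigmoid z <= 4 / (z * z).
Proof.
  intros Hz. unfold sigmoid. set (w := - z).
  assert (Hw2 : w / 2 < exp (w / 2)) by (pose proof (exp_ineq1 (w / 2)); unfold w in *; lra).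
  assert (Hexp : w * w / 4 <= exp w).
  { replace w with (w / 2 + w / 2) at 3 by field. rewrite exp_plus.
    assert (0 < w / 2) by (unfold w; lra). nra. }
  apply Rle_trans with (1 / exp w).
  - apply Rmult_le_compat_l; [lra|]. pose proof (exp_pos w). apply Rinv_le_contravar; lra.
  - replace (z * z) with (w * w) by (unfold w; ring).
    replace (4 / (w * w)) with (1 / (w * w / 4)) by (field; unfold w; lra).
    apply Rmult_le_compat_l; [lra|]. apply Rinv_le_contravar; [|lra].
    unfold w. nra.
Qed.

Lemma sigmoid_var_le z : z <> 0 -> sigmoid z * (1 - sigmoid z) <= 4 / (z * z).
Proof.
  intros Hz. pose proof (sigmoid_bounds z). pose proof (sigmoid_bounds (- z)).
  destruct (Rlt_or_le z 0) as [Hn|Hp].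
  - pose proof (sigmoid_le_sq z Hn). nra.
  - rewrite one_sub_sigmoid in *. pose proof (sigmoid_le_sq (- z) ltac:(lra)).
    replace (- z * - z) with (z * z) in H1 by ring. nra.
Qed.

Section Nash_distributions.

Variables (N : nat) (pot : (nat -> bool) -> R).

Lemma BR_sigmoid lam x i : 0 < lam -> BR N pot lam x i = sigmoid (gain N pot i x / lam).
Proof.
  intros Hl. unfold BR, sigmoid, gain.
  set (A := Uext N pot (upd x i 1)). set (B := Uext N pot (upd x i 0)).
  replace (- ((A - B) / lam)) with (B / lam + - (A / lam)) by (field; lra).
  rewrite exp_plus, exp_Ropp. pose proof (exp_pos (A / lam)). pose proof (exp_pos (B / lam)).
  field. split; lra.
Qed.

Variables (lam : R) (x : nat -> R).
Hypotheses (Hlam : 0 < lam) (Hx : is_ND N pot lam x).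

Lemma ND_sigmoid i : (i < N)%nat -> x i = sigmoid (gain N pot i x / lam).
Proof. intros Hi. rewrite (proj2 Hx i Hi). now apply BR_sigmoid. Qed.

Lemma ND_interior i : (i < N)%nat -> 0 < x i < 1.
Proof. intros Hi. rewrite ND_sigmoid by auto. apply sigmoid_bounds. Qed.

Lemma ND_one_sub_le i m : (i < N)%nat -> 0 < m -> m <= gain N pot i x -> 1 - x i <= lam / m.
Proof.
  intros Hi Hm Hg. rewrite ND_sigmoid by auto.
  eapply Rle_trans; [apply one_sub_sigmoid_le_inv, Rdiv_lt_0_compat; lra|].
  replace (1 / (gain N pot i x / lam)) with (lam / gain N pot i x) by (field; lra).
  apply Rmult_le_compat_l; [lra|]. apply Rinv_le_contravar; lra.
Qed.

Lemma ND_le i m : (i < N)%nat -> 0 < m -> gain N pot i x <= - m -> x i <= lam / m.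
Proof.
  intros Hi Hm Hg. rewrite ND_sigmoid by auto.
  eapply Rle_trans; [apply sigmoid_le_inv, Rdiv_neg_pos; lra|].
  replace (1 / - (gain N pot i x / lam)) with (lam / - gain N pot i x) by (field; lra).
  apply Rmult_le_compat_l; [lra|]. apply Rinv_le_contravar; lra.
Qed.

Lemma ND_var_le i m : (i < N)%nat -> 0 < m -> m <= Rabs (gain N pot i x) ->
  x i * (1 - x i) <= 4 * (lam * lam) / (m * m).
Proof.
  intros Hi Hm Hg. rewrite ND_sigmoid by auto. set (g := gain N pot i x) in *.
  assert (Hg0 : g <> 0) by (intro E; rewrite E, Rabs_R0 in Hg; lra).
  assert (Hz : g / lam <> 0) by (unfold Rdiv; apply Rmult_integral_contrapositive; split;
    [auto|apply Rinv_neq_0_compat; lra]).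
  eapply Rle_trans; [apply sigmoid_var_le, Hz|].
  replace (4 / (g / lam * (g / lam))) with (4 * (lam * lam) / (Rabs g * Rabs g)).
  2:{ rewrite <- Rabs_mult, Rabs_right by nra. field. split; lra. }
  unfold Rdiv. apply Rmult_le_compat_l; [nra|]. apply Rinv_le_contravar; [nra|].
  apply Rmult_le_compat; lra.
Qed.

End Nash_distributions.

Definition incr (phi : nat -> nat) : Prop := forall k, (phi k < phi (S k))%nat.

Lemma incr_ge phi : incr phi -> forall k, (k <= phi k)%nat.
Proof. intros H k; induction k; [lia|]. specialize (H k); lia. Qed.

Lemma incr_comp f g : incr f -> incr g -> incr (fun k => f (g k)).
Proof.
  intros Hf Hg k. assert (Hmono : forall a b, (a < b)%nat -> (f a < f b)%nat).
  { intros a b Hab; induction Hab; [apply Hf|]. specialize (Hf m); lia. }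
  apply Hmono, Hg.
Qed.

Lemma cv_subseq u l phi : Un_cv u l -> incr phi -> Un_cv (fun k => u (phi k)) l.
Proof.
  intros H Hp e He. destruct (H e He) as [M HM]. exists M. intros n Hn. apply HM.
  pose proof (incr_ge phi Hp n). lia.
Qed.

Lemma subseq_select (P : nat -> nat -> Prop) :
  (forall k K, exists n, (K <= n)%nat /\ P k n) -> exists phi, incr phi /\ forall k, P k (phi k).
Proof.
  intros H. set (sel := fun k K => proj1_sig (constructive_indefinite_description _ (H k K))).
  assert (Hs : forall k K, (K <= sel k K)%nat /\ P k (sel k K))
    by (intros k K; unfold sel; destruct constructive_indefinite_description; auto).
  set (phi := fix f k := match k with O => sel O O | S k' => sel k (S (f k')) end).
  exists phi. split.
  - intros k. simpl. destruct (Hs (S k) (S (phi k))); lia.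
  - intros k. destruct k; simpl; apply Hs.
Qed.

Lemma cv_inv_succ : Un_cv (fun k => / (INR k + 1)) 0.
Proof.
  intros e He. destruct (archimed_cor1 e He) as [M [HM HM0]]. exists M. intros n Hn.
  unfold R_dist. rewrite Rminus_0_r. pose proof (pos_INR n).
  rewrite Rabs_right by (left; apply Rinv_0_lt_compat; lra).
  eapply Rle_lt_trans; [|exact HM]. apply Rinv_le_contravar; [apply lt_0_INR; lia|].
  apply le_INR in Hn. lra.
Qed.

Lemma cv_squeeze0 a b : (exists K, forall k, (K <= k)%nat -> Rabs (a k) <= b k) -> Un_cv b 0 -> Un_cv a 0.
Proof.
  intros [K HK] Hb e He. destruct (Hb e He) as [K2 H2]. exists (K + K2)%nat. intros n Hn.
  specialize (HK n ltac:(lia)). specialize (H2 n ltac:(lia)). unfold R_dist in *.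
  rewrite Rminus_0_r in H2 |- *. pose proof (Rle_abs (b n)). lra.
Qed.

Lemma cv_scal0 b c : Un_cv b 0 -> Un_cv (fun k => c * b k) 0.
Proof. intros H. replace 0 with (c * 0) by ring. apply CV_mult; auto using cv_const. Qed.

Lemma cv_subseq_inv_succ (lam : nat -> R) h :
  incr h -> (forall n, 0 < lam n < / (INR n + 1)) -> Un_cv (fun k => lam (h k)) 0.
Proof.
  intros Hh Hl. apply (cv_squeeze0 _ (fun k => / (INR k + 1))); [|apply cv_inv_succ].
  exists 0%nat. intros k _. specialize (Hl (h k)). rewrite Rabs_right by lra.
  pose proof (pos_INR k). pose proof (le_INR _ _ (incr_ge h Hh k)).
  apply Rlt_le, (Rlt_le_trans _ _ _ (proj2 Hl)). apply Rinv_le_contravar; lra.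
Qed.

Lemma cv_le_lim u l c : Un_cv u l -> (forall k, c <= u k) -> c <= l.
Proof.
  intros H Hc. apply Rnot_lt_le. intro Hl. destruct (H (c - l) ltac:(lra)) as [K HK].
  specialize (HK K (le_n _)). specialize (Hc K). unfold R_dist in HK. apply Rabs_def2 in HK. lra.
Qed.

Lemma cv_lim_le u l c : Un_cv u l -> (forall k, u k <= c) -> l <= c.
Proof.
  intros H Hc. apply Ropp_le_cancel.
  apply (cv_le_lim (fun k => - u k)); [|intros; apply Ropp_le_contravar; auto].
  intros e He. destruct (H e He) as [K HK]. exists K. intros n Hn. unfold R_dist in *.
  replace (- u n - - l) with (- (u n - l)) by ring. rewrite Rabs_Ropp; auto.
Qed.

Lemma cv_eventually_gt u l c : Un_cv u l -> c < l -> exists K, forall k, (K <= k)%nat -> c < u k.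
Proof.
  intros H Hl. destruct (H (l - c) ltac:(lra)) as [K HK]. exists K. intros k Hk.
  specialize (HK k Hk). unfold R_dist in HK. apply Rabs_def2 in HK. lra.
Qed.

Lemma cv_eventually_lt u l c : Un_cv u l -> l < c -> exists K, forall k, (K <= k)%nat -> u k < c.
Proof.
  intros H Hl. destruct (H (c - l) ltac:(lra)) as [K HK]. exists K. intros k Hk.
  specialize (HK k Hk). unfold R_dist in HK. apply Rabs_def2 in HK. lra.
Qed.

Lemma bolzano_weierstrass (u : nat -> R) B : (forall k, Rabs (u k) <= B) ->
  exists phi, incr phi /\ exists l, Un_cv (fun k => u (phi k)) l.
Proof.
  intros HB.
  destruct (Bolzano_Weierstrass u (fun c => -B <= c <= B) (compact_P3 (-B) B)) as [l Hl].
  { intros k. specialize (HB k). unfold Rabs in HB; destruct (Rcase_abs (u k)); lra. }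
  destruct (subseq_select (fun k n => Rabs (u n - l) < / (INR k + 1))) as [phi [Hphi Hsel]].
  { intros k K. assert (Hpos : 0 < / (INR k + 1)) by (apply Rinv_0_lt_compat; pose proof (pos_INR k); lra).
    destruct (Hl (fun y => Rabs (y - l) < / (INR k + 1)) K) as [p [Hp Hv]]; eauto.
    exists (mkposreal _ Hpos). intros y Hy. exact Hy. }
  exists phi. split; auto. exists l. intros e He. destruct (cv_inv_succ e He) as [K HK].
  exists K. intros n Hn. specialize (HK n Hn). unfold R_dist in *. rewrite Rminus_0_r in HK.
  specialize (Hsel n). pose proof (Rle_abs (/ (INR n + 1))). lra.
Qed.

Lemma bolzano_weierstrass_vec n : forall (s : nat -> nat -> R) B,
  (forall k i, (i < n)%nat -> Rabs (s k i) <= B) ->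
  exists phi, incr phi /\ exists l, forall i, (i < n)%nat -> Un_cv (fun k => s (phi k) i) (l i).
Proof.
  induction n; intros s B H.
  - exists (fun k => k). split; [intros k; lia|]. exists (fun _ => 0). intros; lia.
  - destruct (IHn s B) as [p1 [Hp1 [l1 Hl1]]]; [intros; apply H; lia|].
    destruct (bolzano_weierstrass (fun k => s (p1 k) n) B) as [p2 [Hp2 [a Ha]]]; [intros; apply H; lia|].
    exists (fun k => p1 (p2 k)). split; [apply incr_comp; auto|].
    exists (fun i => if Nat.eqb i n then a else l1 i). intros i Hi.
    destruct (Nat.eqb_spec i n); [subst; auto|].
    apply (cv_subseq (fun k => s (p1 k) i)); auto. apply Hl1; lia.
Qed.

Lemma cv_inv u l : Un_cv u l -> l <> 0 -> Un_cv (fun k => / u k) (/ l).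
Proof.
  intros H Hl. apply (continuity_seq (fun t => / t)); auto.
  apply (continuity_pt_inv (fun t => t)); auto. apply derivable_continuous_pt, derivable_pt_id.
Qed.

Lemma nonsingular_ext N J J' :
  (forall i j, (i < N)%nat -> (j < N)%nat -> J i j = J' i j) -> nonsingular N J <-> nonsingular N J'.
Proof.
  intros HE.
  assert (Hs : forall v i, (i < N)%nat ->
    fsum N (fun j => J i j * v j) = fsum N (fun j => J' i j * v j))
    by (intros v i Hi; apply fsum_ext; intros j Hj; rewrite HE; auto).
  split; intros H v Hv; apply H; intros i Hi; [rewrite Hs|rewrite <- Hs]; auto.
Qed.

Lemma linearly_stable_ext N J J' :
  (forall i j, (i < N)%nat -> (j < N)%nat -> J i j = J' i j) ->
  linearly_stable N J <-> linearly_stable N J'.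
Proof.
  intros HE.
  assert (Hs : forall v i, (i < N)%nat ->
    fsum N (fun j => J i j * v j) = fsum N (fun j => J' i j * v j))
    by (intros v i Hi; apply fsum_ext; intros j Hj; rewrite HE; auto).
  split; intros H a b [u [w [Hnz He]]]; apply (H a b); exists u, w; split; auto; intros i Hi;
    [rewrite !Hs|rewrite <- !Hs]; auto.
Qed.

Lemma fsum_mult n m f g : fsum n f * fsum m g = fsum n (fun i => fsum m (fun j => f i * g j)).
Proof.
  rewrite Rmult_comm, <- fsum_scal. apply fsum_ext; intros i _.
  rewrite Rmult_comm, <- fsum_scal. reflexivity.
Qed.

Lemma l1_sq_le n (u : nat -> R) :
  fsum n (fun i => Rabs (u i)) * fsum n (fun i => Rabs (u i)) <= INR n * fsum n (fun i => u i * u i).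
Proof.
  rewrite fsum_mult.
  apply Rle_trans with (fsum n (fun i => fsum n (fun j => / 2 * (u i * u i) + / 2 * (u j * u j)))).
  - apply fsum_le; intros i _. apply fsum_le; intros j _.
    assert (Hsq : forall t, Rabs t * Rabs t = t * t)
      by (intros t; rewrite <- Rabs_mult; apply Rabs_right; nra).
    pose proof (Rle_0_sqr (Rabs (u i) - Rabs (u j))). unfold Rsqr in *.
    pose proof (Hsq (u i)). pose proof (Hsq (u j)). nra.
  - right. transitivity (fsum n (fun i => / 2 * (INR n * (u i * u i)) + / 2 * fsum n (fun j => u j * u j))).
    + apply fsum_ext; intros i _. rewrite fsum_plus, fsum_const, fsum_scal. ring.
    + rewrite fsum_plus, fsum_const, !fsum_scal. lra.
Qed.

Section Near_minus_identity.

Variables (N : nat) (J : nat -> nat -> R) (eps : R).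
Hypotheses (Heps : 0 <= eps) (HNeps : INR N * eps < 1)
  (HJ : forall i j, (i < N)%nat -> (j < N)%nat -> Rabs (J i j + (if Nat.eqb i j then 1 else 0)) <= eps).

Let E i j := J i j + (if Nat.eqb i j then 1 else 0).

Lemma near_minus_id_apply v i : (i < N)%nat ->
  fsum N (fun j => E i j * v j) = fsum N (fun j => J i j * v j) + v i.
Proof.
  intros Hi. unfold E. rewrite <- (fsum_kronecker N i v Hi), <- fsum_plus. apply fsum_ext; intros; ring.
Qed.

Lemma near_minus_id_quad u :
  fsum N (fun i => u i * fsum N (fun j => E i j * u j)) <= eps * (INR N * fsum N (fun i => u i * u i)).
Proof.
  eapply Rle_trans; [apply Rle_abs|]. eapply Rle_trans; [apply fsum_abs|].
  set (A := fsum N (fun i => Rabs (u i))).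
  apply Rle_trans with (fsum N (fun i => eps * A * Rabs (u i))).
  - apply fsum_le; intros i Hi. rewrite Rabs_mult, Rmult_comm.
    apply Rmult_le_compat_r; [apply Rabs_pos|].
    apply fsum_matrix_bound. intros j Hj. apply HJ; auto.
  - rewrite fsum_scal. fold A. rewrite Rmult_assoc. apply Rmult_le_compat_l; auto. apply l1_sq_le.
Qed.

Lemma nonsingular_near_minus_id : nonsingular N J.
Proof.
  intros v Hv.
  assert (Hvi : forall i, (i < N)%nat -> Rabs (v i) <= eps * fsum N (fun j => Rabs (v j))).
  { intros i Hi. replace (v i) with (fsum N (fun j => E i j * v j))
      by (rewrite near_minus_id_apply, Hv by auto; ring).
    apply fsum_matrix_bound. intros j Hj. apply HJ; auto. }
  set (S := fsum N (fun j => Rabs (v j))).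
  assert (HS : S <= INR N * (eps * S)) by (unfold S at 1; rewrite <- fsum_const; apply fsum_le; auto).
  assert (0 <= S) by (apply fsum_nonneg; intros; apply Rabs_pos).
  apply fsum_abs_eq0. fold S. nra.
Qed.

(** For an eigenvalue a + ib with eigenvector u + iw: (a + 1)(|u|^2 + |w|^2) = u.Eu + w.Ew. *)
Lemma linearly_stable_near_minus_id : linearly_stable N J.
Proof.
  intros a b [u [w [[k [Hk Hnz]] He]]].
  set (P := fsum N (fun i => u i * u i + w i * w i)).
  assert (HP : 0 < P).
  { apply Rlt_le_trans with (u k * u k + w k * w k).
    - destruct Hnz as [Hn|Hn]; pose proof (Rsqr_pos_lt _ Hn); unfold Rsqr in *; nra.
    - apply (fsum_term_le N (fun i => u i * u i + w i * w i)); auto. intros; nra. }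
  assert (Hid : fsum N (fun i => u i * fsum N (fun j => E i j * u j))
              + fsum N (fun i => w i * fsum N (fun j => E i j * w j)) = (a + 1) * P).
  { unfold P. rewrite <- fsum_plus, <- fsum_scal. apply fsum_ext; intros i Hi.
    rewrite !near_minus_id_apply by auto. destruct (He i Hi) as [-> ->]. ring. }
  pose proof (near_minus_id_quad u). pose proof (near_minus_id_quad w).
  assert (Hb : (a + 1) * P <= eps * (INR N * P)).
  { rewrite <- Hid. unfold P. rewrite fsum_plus, !Rmult_plus_distr_l. lra. }
  assert (eps * (INR N * P) < P) by (replace (eps * (INR N * P)) with ((INR N * eps) * P) by ring; nra).
  destruct (Rlt_or_le a 0); auto. nra.
Qed.

End Near_minus_identity.

Definition quad (n : nat) (S : nat -> nat -> R) (v : nat -> R) : R :=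
  fsum n (fun i => v i * fsum n (fun j => S i j * v j)).

Definition wnorm (n : nat) (d : nat -> R) (v : nat -> R) : R := fsum n (fun i => v i * v i / d i).

Lemma quad_scal n S v c : quad n S (fun i => c * v i) = c * c * quad n S v.
Proof.
  unfold quad. rewrite <- fsum_scal. apply fsum_ext; intros i _.
  rewrite (fsum_ext n _ (fun j => c * (S i j * v j))) by (intros; ring). rewrite fsum_scal. ring.
Qed.

Lemma wnorm_scal n d v c : wnorm n d (fun i => c * v i) = c * c * wnorm n d v.
Proof. unfold wnorm. rewrite <- fsum_scal. apply fsum_ext; intros i _. unfold Rdiv. ring. Qed.

Lemma quad_cv n S (s : nat -> nat -> R) l : (forall i, (i < n)%nat -> Un_cv (fun k => s k i) (l i)) ->
  Un_cv (fun k => quad n S (s k)) (quad n S l).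
Proof.
  intros H. apply fsum_cv. intros i Hi. apply CV_mult; auto.
  apply (fsum_cv n (fun k j => S i j * s k j)). intros j Hj. apply CV_mult; auto using cv_const.
Qed.

Lemma wnorm_cv n d (s : nat -> nat -> R) l : (forall i, (i < n)%nat -> Un_cv (fun k => s k i) (l i)) ->
  Un_cv (fun k => wnorm n d (s k)) (wnorm n d l).
Proof.
  intros H. apply (fsum_cv n (fun k i => s k i * s k i / d i)). intros i Hi.
  unfold Rdiv. apply CV_mult; auto using CV_mult, cv_const.
Qed.

Lemma quadratic_nonpos_linear_coef c F : (forall t, 2 * t * c + t * t * F <= 0) -> c = 0.
Proof.
  intros Ht. destruct (Req_dec c 0) as [|Hc]; auto. exfalso.
  assert (0 < c * c) by (pose proof (Rsqr_pos_lt c Hc); unfold Rsqr in *; lra).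
  assert (HF : F <= 0) by (pose proof (Ht 1); pose proof (Ht (-1)); lra).
  specialize (Ht (c / (1 - F))).
  replace (2 * (c / (1 - F)) * c + c / (1 - F) * (c / (1 - F)) * F)
    with (c * c * (2 - F) / ((1 - F) * (1 - F))) in Ht by (field; lra).
  assert (0 < c * c * (2 - F) / ((1 - F) * (1 - F))) by (apply Rdiv_lt_0_compat; nra).
  lra.
Qed.

(** Maximising [quad S] on [wnorm d = 1] yields an eigenvector of [diag(d) S]. *)
Section Rayleigh.

Variables (n : nat) (d : nat -> R) (S : nat -> nat -> R).
Hypotheses (Hd : forall i, (i < n)%nat -> 0 < d i)
  (HS : forall i j, (i < n)%nat -> (j < n)%nat -> S i j = S j i).

Notation Q := (quad n S).
Notation W := (wnorm n d).

Lemma wnorm_term_nonneg v i : (i < n)%nat -> 0 <= v i * v i / d i.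
Proof.
  intros Hi. specialize (Hd i Hi). apply Rmult_le_pos; [nra|]. left; apply Rinv_0_lt_compat; auto.
Qed.

Lemma wnorm_nonneg v : 0 <= W v.
Proof. apply fsum_nonneg, wnorm_term_nonneg. Qed.

Lemma quad_of_wnorm0 v : W v = 0 -> Q v = 0.
Proof.
  intros HW. apply fsum_zero. intros i Hi.
  pose proof (fsum_nonneg_eq0 n _ (wnorm_term_nonneg v) HW i Hi). specialize (Hd i Hi).
  assert (v i * v i = 0).
  { apply (Rmult_eq_reg_r (/ d i)); [|apply Rinv_neq_0_compat; lra]. rewrite Rmult_0_l. auto. }
  assert (v i = 0) by nra. rewrite H1. ring.
Qed.

Lemma wnorm_normalize v : 0 < W v ->
  W (fun i => / sqrt (W v) * v i) = 1 /\ Q (fun i => / sqrt (W v) * v i) = Q v / W v.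
Proof.
  intros Hv. rewrite wnorm_scal, quad_scal.
  replace (/ sqrt (W v) * / sqrt (W v)) with (/ W v) by (rewrite <- Rinv_mult, sqrt_sqrt; lra).
  split; field; lra.
Qed.

Lemma wnorm1_bounded v i : W v = 1 -> (i < n)%nat -> Rabs (v i) <= 1 + fsum n d.
Proof.
  intros Hv Hi.
  assert (v i * v i / d i <= 1)
    by (rewrite <- Hv; apply (fsum_term_le n (fun i => v i * v i / d i)); auto using wnorm_term_nonneg).
  assert (v i * v i <= d i).
  { pose proof (Hd i Hi). apply Rmult_le_reg_r with (/ d i); [apply Rinv_0_lt_compat; auto|].
    rewrite Rinv_r by lra. exact H. }
  assert (d i <= fsum n d) by (apply fsum_term_le; auto; intros j Hj; left; auto).
  assert (Rabs (v i) <= 1 + v i * v i) by (unfold Rabs; destruct (Rcase_abs (v i)); nra).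
  lra.
Qed.

Lemma quad_bounded_on_wnorm1 : exists M, forall v, W v = 1 -> Q v <= M.
Proof.
  set (B := 1 + fsum n d).
  exists (fsum n (fun i => B * fsum n (fun j => Rabs (S i j) * B))). intros v Hv.
  eapply Rle_trans; [apply Rle_abs|]. eapply Rle_trans; [apply fsum_abs|].
  apply fsum_le; intros i Hi. rewrite Rabs_mult.
  apply Rmult_le_compat; auto using Rabs_pos, wnorm1_bounded.
  eapply Rle_trans; [apply fsum_abs|]. apply fsum_le; intros j Hj. rewrite Rabs_mult.
  apply Rmult_le_compat_l; auto using Rabs_pos, wnorm1_bounded.
Qed.

Lemma rayleigh_sup : (exists v0, 0 < W v0) -> exists mu,
  (forall v, Q v <= mu * W v) /\ (forall e, 0 < e -> exists v, W v = 1 /\ mu - e < Q v).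
Proof.
  intros [v0 Hv0]. destruct quad_bounded_on_wnorm1 as [M HM].
  set (E := fun r => exists v, W v = 1 /\ r = Q v).
  assert (HE : bound E) by (exists M; intros r [v [Hv ->]]; auto).
  assert (HE0 : exists r, E r)
    by (eexists; eexists; split; [apply (wnorm_normalize v0 Hv0)|reflexivity]).
  destruct (completeness E HE HE0) as [mu [Hub Hlub]].
  exists mu. split.
  - intros v. destruct (wnorm_nonneg v) as [Hp|Hz].
    + destruct (wnorm_normalize v Hp) as [H1 H2].
      assert (Hin := Hub _ (ex_intro _ _ (conj H1 eq_refl))). rewrite H2 in Hin.
      apply Rmult_le_reg_r with (/ W v); [apply Rinv_0_lt_compat; auto|].
      replace (mu * W v * / W v) with mu by (field; lra). exact Hin.
    + rewrite quad_of_wnorm0, <- Hz; auto. lra.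
  - intros e He. apply NNPP. intros Hn. assert (mu <= mu - e); [|lra].
    apply Hlub. intros r [v [Hv ->]]. apply Rnot_lt_le. intro Hc. apply Hn. eauto.
Qed.

Lemma rayleigh_sup_attained mu : (forall e, 0 < e -> exists v, W v = 1 /\ mu - e < Q v) ->
  (forall v, Q v <= mu * W v) -> exists l, W l = 1 /\ Q l = mu.
Proof.
  intros Happ Hub.
  assert (Hseq : forall k : nat, exists v, W v = 1 /\ mu - / (INR k + 1) < Q v)
    by (intros k; apply Happ, Rinv_0_lt_compat; pose proof (pos_INR k); lra).
  set (s := fun k => proj1_sig (constructive_indefinite_description _ (Hseq k))).
  assert (Hs : forall k, W (s k) = 1 /\ mu - / (INR k + 1) < Q (s k))
    by (intros k; unfold s; destruct constructive_indefinite_description; auto).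
  destruct (bolzano_weierstrass_vec n s (1 + fsum n d)) as [phi [Hphi [l Hl]]].
  { intros k i Hi. apply wnorm1_bounded; auto. apply Hs. }
  assert (HW : W l = 1).
  { apply (UL_sequence (fun k => W (s (phi k)))); [apply wnorm_cv; auto|].
    rewrite (functional_extensionality (fun k => W (s (phi k))) (fun _ => 1))
      by (intros k; apply Hs). apply cv_const. }
  exists l. split; auto. apply Rle_antisym; [pose proof (Hub l) as H; rewrite HW in H; lra|].
  apply (cv_le_lim (fun k => Q (s (phi k)) + / (INR (phi k) + 1))).
  - replace (Q l) with (Q l + 0) by ring. apply CV_plus; [apply quad_cv; auto|].
    apply (cv_subseq (fun k => / (INR k + 1))); auto using cv_inv_succ.
  - intros k. pose proof (proj2 (Hs (phi k))). lra.
Qed.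

Lemma quad_add_unit l t k : (k < n)%nat ->
  Q (fun i => l i + t * (if Nat.eqb i k then 1 else 0))
  = Q l + 2 * t * fsum n (fun j => S k j * l j) + t * t * S k k.
Proof.
  intros Hk. unfold quad.
  assert (Hin : forall i, (i < n)%nat -> fsum n (fun j => S i j * (l j + t * (if Nat.eqb j k then 1 else 0)))
                 = fsum n (fun j => S i j * l j) + t * S i k).
  { intros i Hi. rewrite <- (fsum_delta n k (t * S i k) Hk), <- fsum_plus.
    apply fsum_ext; intros j _. destruct (Nat.eqb_spec j k); [subst|]; ring. }
  rewrite (fsum_ext n _ (fun i => l i * fsum n (fun j => S i j * l j) + t * (S k i * l i)
      + (if Nat.eqb i k then t * fsum n (fun j => S k j * l j) + t * t * S k k else 0))).
  - rewrite !fsum_plus, fsum_scal, fsum_delta by auto. ring.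
  - intros i Hi. rewrite Hin by auto. rewrite (HS k i) by auto.
    destruct (Nat.eqb_spec i k); [subst|]; ring.
Qed.

Lemma wnorm_add_unit l t k : (k < n)%nat ->
  W (fun i => l i + t * (if Nat.eqb i k then 1 else 0)) = W l + 2 * t * (l k / d k) + t * t / d k.
Proof.
  intros Hk. unfold wnorm.
  rewrite (fsum_ext n _ (fun i => l i * l i / d i
      + (if Nat.eqb i k then 2 * t * (l k / d k) + t * t / d k else 0))).
  - rewrite fsum_plus, fsum_delta by auto. ring.
  - intros i Hi. destruct (Nat.eqb_spec i k); [subst|]; unfold Rdiv; ring.
Qed.

Lemma rayleigh_max_eigen mu l : (forall v, Q v <= mu * W v) -> Q l = mu * W l ->
  forall k, (k < n)%nat -> d k * fsum n (fun j => S k j * l j) = mu * l k.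
Proof.
  intros Hub Hl k Hk.
  assert (Hc : fsum n (fun j => S k j * l j) - mu * (l k / d k) = 0).
  { apply (quadratic_nonpos_linear_coef _ (S k k - mu / d k)). intros t.
    pose proof (Hub (fun i => l i + t * (if Nat.eqb i k then 1 else 0))).
    rewrite quad_add_unit, wnorm_add_unit in H by auto. unfold Rdiv in *. nra. }
  specialize (Hd k Hk). replace (fsum n (fun j => S k j * l j)) with (mu * (l k / d k)) by lra.
  field. lra.
Qed.

End Rayleigh.

Lemma quad_two_units n S i k a b : (i < n)%nat -> (k < n)%nat -> i <> k ->
  quad n S (fun c => (if Nat.eqb c i then a else 0) + (if Nat.eqb c k then b else 0)) =
  a * a * S i i + a * b * (S i k + S k i) + b * b * S k k.
Proof.
  intros Hi Hk Hik. unfold quad.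
  set (v := fun c => (if Nat.eqb c i then a else 0) + (if Nat.eqb c k then b else 0)).
  assert (Hin : forall c, fsum n (fun j => S c j * v j) = a * S c i + b * S c k).
  { intros c. unfold v.
    rewrite <- (fsum_delta n i (a * S c i) Hi), <- (fsum_delta n k (b * S c k) Hk), <- fsum_plus.
    apply fsum_ext; intros j Hj. destruct (Nat.eqb_spec j i), (Nat.eqb_spec j k); subst; try ring; congruence. }
  rewrite (fsum_ext n _ (fun c => (if Nat.eqb c i then a * (a * S i i + b * S i k) else 0)
                                + (if Nat.eqb c k then b * (a * S k i + b * S k k) else 0))).
  - rewrite fsum_plus, !fsum_delta by auto. ring.
  - intros c Hc. rewrite Hin. unfold v.
    destruct (Nat.eqb_spec c i), (Nat.eqb_spec c k); subst; try ring; congruence.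
Qed.

Lemma not_linearly_stable_of_indefinite N (d : nat -> R) (S J : nat -> nat -> R) :
  (forall i, (i < N)%nat -> 0 < d i) ->
  (forall i j, (i < N)%nat -> (j < N)%nat -> S i j = S j i) ->
  (forall i j, (i < N)%nat -> (j < N)%nat -> J i j = d i * S i j) ->
  (exists v, 0 < quad N S v) -> ~ linearly_stable N J.
Proof.
  intros Hd HS HJ [v0 Hv0] Hst.
  assert (HW0 : 0 < wnorm N d v0).
  { destruct (wnorm_nonneg N d Hd v0) as [|Hz]; auto.
    rewrite (quad_of_wnorm0 N d S Hd v0) in Hv0; auto. lra. }
  destruct (rayleigh_sup N d S Hd (ex_intro _ v0 HW0)) as [mu [Hub Happ]].
  destruct (rayleigh_sup_attained N d S Hd mu Happ Hub) as [l [HWl HQl]].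
  assert (Hmu : 0 < mu) by (pose proof (Hub v0); nra).
  assert (Hl : exists i, (i < N)%nat /\ l i <> 0).
  { apply NNPP; intro Hn. assert (wnorm N d l = 0); [|lra].
    apply fsum_zero. intros i Hi. destruct (Req_dec (l i) 0) as [->|]; [unfold Rdiv; ring|].
    exfalso; eauto. }
  assert (mu < 0); [|lra].
  apply (Hst mu 0). exists l, (fun _ => 0). split.
  - destruct Hl as [i [Hi Hli]]. eauto.
  - intros i Hi. rewrite (fsum_zero N (fun j => J i j * 0)) by (intros; ring). split; [|ring].
    rewrite (fsum_ext N _ (fun j => d i * (S i j * l j))) by (intros j Hj; rewrite HJ; auto; ring).
    rewrite fsum_scal, (rayleigh_max_eigen N d S Hd HS mu l Hub); auto; [ring|].
    rewrite HWl, HQl. ring.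
Qed.

Lemma continuous_gap_invariant (f : R -> R) lo hi a b :
  a < b -> (forall z, lo <= z <= hi -> continuity_pt f z) ->
  (forall z, lo <= z <= hi -> f z <= b -> f z <= a) ->
  forall s t, lo <= s <= hi -> lo <= t <= hi -> f s <= b -> f t <= b.
Proof.
  intros Hab Hf Hgap s t Hs Ht Hfs. apply Rnot_lt_le. intros Hft.
  assert (Hfs' : f s <= a) by auto. set (m := (a + b) / 2).
  assert (Hlevel : forall z, lo <= z <= hi -> f z <> m)
    by (intros z Hz E; assert (f z <= a) by (apply Hgap; unfold m in *; lra); unfold m in *; lra).
  destruct (Rtotal_order s t) as [Hst|[<-|Hts]]; [|lra|].
  - destruct (Ranalysis5.IVT_interv (fun l => f l - m) s t) as [z [Hz Hfz]]; try (unfold m; lra).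
    + intros z Hz. apply continuity_pt_minus; [apply Hf; lra|apply continuity_pt_const; intros ??; auto].
    + apply (Hlevel z); lra.
  - destruct (Ranalysis5.IVT_interv (fun l => m - f l) t s) as [z [Hz Hfz]]; try (unfold m; lra).
    + intros z Hz. apply continuity_pt_minus; [apply continuity_pt_const; intros ??; auto|apply Hf; lra].
    + apply (Hlevel z); lra.
Qed.

Lemma fsum_uniformly_small n (g : nat -> R -> R) (a : nat -> R) (P : R -> Prop) l0 :
  (forall i, (i < n)%nat -> forall e, 0 < e -> exists alp, 0 < alp /\
     forall l, P l -> Rabs (l - l0) < alp -> Rabs (g i l - a i) < e) ->
  forall e, 0 < e -> exists alp, 0 < alp /\
     forall l, P l -> Rabs (l - l0) < alp -> fsum n (fun i => Rabs (g i l - a i)) < e.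
Proof.
  induction n; intros H e He.
  - exists 1. split; [lra|]. intros; simpl; lra.
  - destruct (IHn ltac:(intros i Hi; apply H; lia) (e / 2) ltac:(lra)) as [a1 [Ha1 H1]].
    destruct (H n ltac:(lia) (e / 2) ltac:(lra)) as [a2 [Ha2 H2]].
    exists (Rmin a1 a2). split; [apply Rmin_pos; auto|]. intros l Pl Hl. simpl.
    pose proof (Rmin_l a1 a2). pose proof (Rmin_r a1 a2).
    specialize (H1 l Pl ltac:(lra)). specialize (H2 l Pl ltac:(lra)). lra.
Qed.

Section Branches.

Variables (N : nat) (pot : (nat -> bool) -> R) (lam1 : R) (branch : (nat -> R) -> R -> (nat -> R)).
Hypothesis Hbr : is_branch_system N pot lam1 branch.
Variables (xs p : nat -> R).
Hypothesis Hxs : is_NE N pot xs.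

Let f l := dist1 N (branch xs l) p.

Lemma branch_dist_near l0 a : (forall i, (i < N)%nat ->
    limit1_in (fun l => branch xs l i) (fun l => 0 < l < lam1) (a i) l0) ->
  forall e, 0 < e -> exists alp, 0 < alp /\
    forall l, 0 < l < lam1 -> Rabs (l - l0) < alp -> Rabs (f l - dist1 N a p) < e.
Proof.
  intros Hc e He.
  assert (Hc' : forall i, (i < N)%nat -> forall e, 0 < e -> exists alp, 0 < alp /\
     forall l, 0 < l < lam1 -> Rabs (l - l0) < alp -> Rabs (branch xs l i - a i) < e).
  { intros i Hi e' He'. destruct (Hc i Hi e' He') as [alp [Halp H]]. exists alp. split; auto.
    intros l Hl Hd. apply (H l (conj Hl Hd)). }
  destruct (fsum_uniformly_small N (fun i l => branch xs l i) a _ l0 Hc' e He) as [alp [Halp H]].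
  exists alp. split; auto. intros l Hl Hd. eapply Rle_lt_trans; [apply dist1_lip|]. apply H; auto.
Qed.

Lemma branch_dist_continuous l0 : 0 < l0 < lam1 -> continuity_pt f l0.
Proof.
  intros Hl0. destruct Hbr as [_ [Hb _]]. destruct (Hb xs Hxs) as [_ Hc].
  intros e He. simpl. unfold R_dist.
  destruct (branch_dist_near l0 (branch xs l0)) with (e := e) as [alp [Halp H]]; auto.
  { intros i Hi. apply (proj1 (Hc i Hi) l0 Hl0). }
  exists (Rmin alp (Rmin l0 (lam1 - l0))).
  split; [apply Rmin_pos; [|apply Rmin_pos]; lra|].
  intros l [_ Hl]. pose proof (Rmin_l alp (Rmin l0 (lam1 - l0))). pose proof (Rmin_r alp (Rmin l0 (lam1 - l0))).
  pose proof (Rmin_l l0 (lam1 - l0)). pose proof (Rmin_r l0 (lam1 - l0)).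
  apply H; [|lra]. apply Rabs_def2 in Hl. lra.
Qed.

Lemma branch_dist_lim0 e : 0 < e -> exists alp, 0 < alp /\
  forall l, 0 < l < lam1 -> l < alp -> Rabs (f l - dist1 N xs p) < e.
Proof.
  intros He. destruct Hbr as [_ [Hb _]]. destruct (Hb xs Hxs) as [_ Hc].
  destruct (branch_dist_near 0 xs) with (e := e) as [alp [Halp H]]; auto.
  { intros i Hi. apply (proj2 (Hc i Hi)). }
  exists alp. split; auto. intros l Hl Hla. apply H; auto. rewrite Rminus_0_r, Rabs_right; lra.
Qed.

Lemma branch_dist_gap_invariant lam a b : a < b -> 0 < lam < lam1 ->
  (forall l, 0 < l <= lam -> f l <= b -> f l <= a) ->
  forall s t, 0 < s <= lam -> 0 < t <= lam -> f s <= b -> f t <= b.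
Proof.
  intros Hab Hl Hgap s t Hs Ht.
  apply (continuous_gap_invariant f (Rmin s t) lam a b); auto.
  - intros z Hz. pose proof (Rmin_glb_lt s t 0 ltac:(lra) ltac:(lra)). apply branch_dist_continuous. lra.
  - intros z Hz. pose proof (Rmin_glb_lt s t 0 ltac:(lra) ltac:(lra)). apply Hgap. lra.
  - split; [apply Rmin_l|lra].
  - split; [apply Rmin_r|lra].
Qed.

End Branches.

Definition pure_NE (N : nat) (pot : (nat -> bool) -> R) (p : nat -> R) : Prop :=
  is_NE N pot p /\ is_pure N p.

Lemma exists_pos_below alp lam : 0 < alp -> 0 < lam -> exists t, 0 < t <= lam /\ t < alp.
Proof.
  intros Ha Hl. exists (Rmin alp lam / 2). pose proof (Rmin_l alp lam). pose proof (Rmin_r alp lam).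
  pose proof (Rmin_glb_lt alp lam 0 Ha Hl). lra.
Qed.

Section Near_pure_equilibria.

Variables (N : nat) (pot : (nat -> bool) -> R) (lam1 : R) (branch : (nat -> R) -> R -> (nat -> R)).
Hypotheses (Hreg : regular_potential_game N pot) (Hbr : is_branch_system N pot lam1 branch).

(** [delta] is small enough that within distance [2 delta] of a pure equilibrium the
    gains keep the sign they have there, and [lamP] is small enough that Nash
    distributions within [2 delta] of it are within [delta / 2] and have Jacobian close to [-I]. *)
Variables (c L B delta lamP : R).
Hypotheses (Hc : 0 < c)
  (Hc_gap : forall p i, is_pure N p -> (i < N)%nat -> gain N pot i p <> 0 -> c <= Rabs (gain N pot i p))
  (HL : 0 <= L)
  (HL_lip : forall i y z, (i < N)%nat -> in_Delta N y -> in_Delta N z ->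
     Rabs (gain N pot i y - gain N pot i z) <= L * dist1 N y z)
  (HB_hess : forall i j y, in_Delta N y -> Rabs (hess N pot i j y) <= B)
  (Hdelta : 0 < delta) (HLdelta : 4 * L * delta <= c)
  (HlamP : 0 < lamP <= lam1) (HlamP_dist : INR N * (2 * lamP / c) <= delta / 2)
  (HlamP_jac : INR N * (16 * lamP * B / (c * c)) < 1).

Lemma pure_NE_gain p i : pure_NE N pot p -> (i < N)%nat ->
  (p i = 1 -> c <= gain N pot i p) /\ (p i = 0 -> gain N pot i p <= - c).
Proof.
  intros [HpNE Hpp] Hi. destruct (proj1 (Hreg p HpNE) i Hi) as [Q1 Q0].
  split; intros Hpi.
  - specialize (Q1 Hpi). assert (0 < gain N pot i p) by (unfold gain; lra).
    pose proof (Hc_gap p i Hpp Hi ltac:(lra)). rewrite Rabs_right in H0; lra.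
  - specialize (Q0 Hpi). assert (gain N pot i p < 0) by (unfold gain; lra).
    pose proof (Hc_gap p i Hpp Hi ltac:(lra)). rewrite Rabs_left in H0; lra.
Qed.

Lemma gain_near_pure_NE p y i : pure_NE N pot p -> in_Delta N y -> dist1 N y p <= 2 * delta ->
  (i < N)%nat -> (p i = 1 -> c / 2 <= gain N pot i y) /\ (p i = 0 -> gain N pot i y <= - (c / 2)).
Proof.
  intros Hp Hy Hd Hi. pose proof (HL_lip i y p Hi Hy (proj1 (proj1 Hp))) as Hlip.
  assert (L * dist1 N y p <= c / 2)
    by (apply Rle_trans with (L * (2 * delta)); [apply Rmult_le_compat_l|]; lra).
  apply Rabs_le_inv in Hlip. destruct (pure_NE_gain p i Hp Hi) as [H1 H0].
  split; intros Hpi; [specialize (H1 Hpi)|specialize (H0 Hpi)]; lra.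
Qed.

Lemma NE_near_pure_NE ys p : is_NE N pot ys -> pure_NE N pot p -> dist1 N ys p <= 2 * delta -> veq N ys p.
Proof.
  intros Hys Hp Hd i Hi. destruct (gain_near_pure_NE p ys i Hp (proj1 Hys) Hd Hi) as [S1 S0].
  destruct (NE_gain_sign N pot ys i Hys Hi) as [N1 N0].
  destruct (proj2 Hp i Hi) as [E|E]; rewrite E.
  - apply N0. specialize (S0 E). lra.
  - apply N1. specialize (S1 E). lra.
Qed.

Section At_a_Nash_distribution.

Variables (lam : R) (x p : nat -> R).
Hypotheses (Hlam : 0 < lam < lamP) (Hx : is_ND N pot lam x) (Hp : pure_NE N pot p)
  (Hxp : dist1 N x p <= 2 * delta).

Lemma ND_near_pure_NE_dist : dist1 N x p <= delta / 2.
Proof.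
  apply Rle_trans with (INR N * (2 * lam / c)).
  - unfold dist1 at 1. rewrite <- fsum_const. apply fsum_le. intros i Hi.
    destruct (gain_near_pure_NE p x i Hp (proj1 Hx) Hxp Hi) as [S1 S0].
    pose proof (ND_interior N pot lam x ltac:(lra) Hx i Hi).
    replace (2 * lam / c) with (lam / (c / 2)) by (field; lra).
    destruct (proj2 Hp i Hi) as [E|E]; rewrite E.
    + rewrite Rminus_0_r, Rabs_right by lra. apply (ND_le N pot lam x); auto; lra.
    + rewrite Rabs_left1 by lra. rewrite Ropp_minus_distr.
      apply (ND_one_sub_le N pot lam x); auto; lra.
  - eapply Rle_trans; [|exact HlamP_dist]. apply Rmult_le_compat_l; [apply pos_INR|].
    unfold Rdiv. apply Rmult_le_compat_r; [left; apply Rinv_0_lt_compat; auto|lra].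
Qed.

Lemma ND_near_pure_NE_jac i j : (i < N)%nat -> (j < N)%nat ->
  Rabs (jac N pot lam x i j + (if Nat.eqb i j then 1 else 0)) <= 16 * lam * B / (c * c).
Proof.
  intros Hi Hj. unfold jac.
  replace (x i * (1 - x i) * hess N pot i j x / lam - (if Nat.eqb i j then 1 else 0)
           + (if Nat.eqb i j then 1 else 0)) with (x i * (1 - x i) / lam * hess N pot i j x)
    by (field; lra).
  assert (Hm : c / 2 <= Rabs (gain N pot i x)).
  { destruct (gain_near_pure_NE p x i Hp (proj1 Hx) Hxp Hi) as [S1 S0].
    destruct (proj2 Hp i Hi) as [E|E]; [specialize (S0 E)|specialize (S1 E)];
      [rewrite Rabs_left|rewrite Rabs_right]; lra. }
  pose proof (ND_var_le N pot lam x ltac:(lra) Hx i (c / 2) Hi ltac:(lra) Hm) as Hvar.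
  pose proof (ND_interior N pot lam x ltac:(lra) Hx i Hi).
  pose proof (HB_hess i j x (proj1 Hx)). pose proof (Rabs_pos (hess N pot i j x)).
  rewrite Rabs_mult, Rabs_right by (apply Rle_ge, Rdiv_le_0_compat; nra).
  apply Rle_trans with (4 * (lam * lam) / (c / 2 * (c / 2)) / lam * B).
  - apply Rmult_le_compat; try (apply Rdiv_le_0_compat; nra); auto.
    unfold Rdiv. apply Rmult_le_compat_r; [left; apply Rinv_0_lt_compat; lra|exact Hvar].
  - right. field. lra.
Qed.

Lemma ND_near_pure_NE_hyperbolic_stable :
  nonsingular N (jac N pot lam x) /\ linearly_stable N (jac N pot lam x).
Proof.
  assert (0 <= B) by (eapply Rle_trans; [apply Rabs_pos|apply (HB_hess 0 0 x (proj1 Hx))]).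
  assert (Heps : 0 <= 16 * lam * B / (c * c)) by (apply Rdiv_le_0_compat; nra).
  assert (HNeps : INR N * (16 * lam * B / (c * c)) < 1).
  { eapply Rle_lt_trans; [|exact HlamP_jac]. apply Rmult_le_compat_l; [apply pos_INR|].
    unfold Rdiv. apply Rmult_le_compat_r; [left; apply Rinv_0_lt_compat; nra|nra]. }
  split; [apply (nonsingular_near_minus_id N _ (16 * lam * B / (c * c)))
          |apply (linearly_stable_near_minus_id N _ (16 * lam * B / (c * c)))];
    auto using ND_near_pure_NE_jac.
Qed.

End At_a_Nash_distribution.

Lemma branch_ND l xs : is_NE N pot xs -> 0 < l < lam1 -> is_ND N pot l (branch xs l).
Proof. intros Hxs Hl. destruct Hbr as [_ [Hb _]]. apply (proj1 (Hb xs Hxs)); auto. Qed.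

Lemma branch_gap xs p lam : is_NE N pot xs -> pure_NE N pot p -> 0 < lam < lamP ->
  forall l, 0 < l <= lam -> dist1 N (branch xs l) p <= 2 * delta -> dist1 N (branch xs l) p <= delta / 2.
Proof.
  intros Hxs Hp Hl l Hl' Hd. apply (ND_near_pure_NE_dist l); auto; [lra|]. apply branch_ND; auto; lra.
Qed.

Lemma branch_near_pure_NE xs p lam : is_NE N pot xs -> pure_NE N pot p -> 0 < lam < lamP ->
  dist1 N (branch xs lam) p <= delta / 2 -> veq N xs p.
Proof.
  intros Hxs Hp Hl Hd. apply NE_near_pure_NE; auto. apply Rnot_lt_le. intros Hfar.
  destruct (branch_dist_lim0 N pot lam1 branch Hbr xs p Hxs (dist1 N xs p - 2 * delta)) as [alp [Halp Hlim]];
    [lra|].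
  destruct (exists_pos_below alp lam Halp ltac:(lra)) as [t [Ht Hta]].
  assert (dist1 N (branch xs t) p <= 2 * delta).
  { apply (branch_dist_gap_invariant N pot lam1 branch Hbr xs p Hxs lam (delta / 2) (2 * delta))
      with (s := lam); try lra. apply branch_gap; auto. }
  specialize (Hlim t ltac:(lra) Hta). apply Rabs_def2 in Hlim. lra.
Qed.

Lemma branch_of_pure_NE_near xs lam : pure_NE N pot xs -> 0 < lam < lamP ->
  dist1 N (branch xs lam) xs <= 2 * delta.
Proof.
  intros Hxs Hl.
  destruct (branch_dist_lim0 N pot lam1 branch Hbr xs xs (proj1 Hxs) (delta / 2)) as [alp [Halp Hlim]];
    [lra|].
  destruct (exists_pos_below alp lam Halp ltac:(lra)) as [t [Ht Hta]].
  specialize (Hlim t ltac:(lra) Hta). rewrite dist1_self, Rminus_0_r in Hlim. apply Rabs_def2 in Hlim.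
  apply (branch_dist_gap_invariant N pot lam1 branch Hbr xs xs (proj1 Hxs) lam (delta / 2) (2 * delta))
    with (s := t); try lra. apply branch_gap; auto. apply Hxs.
Qed.

Lemma near_pure_NE_regime lam x p : 0 < lam < lamP -> is_ND N pot lam x -> pure_NE N pot p ->
  dist1 N x p <= 2 * delta ->
  nonsingular N (jac N pot lam x) /\ linearly_stable N (jac N pot lam x) /\ pure_ND N pot branch lam x.
Proof.
  intros Hl Hx Hp Hd. destruct (ND_near_pure_NE_hyperbolic_stable lam x p) as [NS ST]; auto.
  split; [|split]; auto.
  destruct Hbr as [_ [_ Hb]]. destruct (proj2 (Hb lam ltac:(lra)) x Hx) as [ys [Hys Hv]].
  assert (Hyp : veq N ys p).
  { apply (branch_near_pure_NE ys p lam); auto.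
    rewrite <- (dist1_veq N x (branch ys lam) p Hv). apply (ND_near_pure_NE_dist lam); auto. }
  exists ys. split; [|split]; auto. intros i Hi. rewrite (Hyp i Hi). apply (proj2 Hp i Hi).
Qed.

Lemma far_from_pure_NE_not_pure_ND lam x : 0 < lam < lamP ->
  (forall p, pure_NE N pot p -> 2 * delta < dist1 N x p) -> ~ pure_ND N pot branch lam x.
Proof.
  intros Hl Hfar [xs [Hxs [Hxp Hv]]].
  specialize (Hfar xs (conj Hxs Hxp)).
  rewrite (dist1_veq N x (branch xs lam) xs Hv) in Hfar.
  pose proof (branch_of_pure_NE_near xs lam (conj Hxs Hxp) Hl). lra.
Qed.

End Near_pure_equilibria.

Lemma jac_apply N pot lam x w i : (i < N)%nat ->
  fsum N (fun j => jac N pot lam x i j * w j)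
  = x i * (1 - x i) / lam * fsum N (fun j => hess N pot i j x * w j) - w i.
Proof.
  intros Hi. unfold jac. rewrite <- (fsum_kronecker N i w Hi), <- fsum_scal, <- fsum_minus.
  apply fsum_ext; intros; unfold Rdiv; ring.
Qed.

Lemma var_cv (s : nat -> nat -> R) l a : Un_cv (fun k => s k a) (l a) ->
  Un_cv (fun k => s k a * (1 - s k a)) (l a * (1 - l a)).
Proof. intros H. apply CV_mult; auto. apply CV_minus; auto using cv_const. Qed.

Section Vanishing_noise.

Variables (N : nat) (pot : (nat -> bool) -> R).
Variables (lam : nat -> R) (x : nat -> nat -> R) (xb : nat -> R).
Hypotheses (Hlam : forall k, 0 < lam k) (Hx : forall k, is_ND N pot (lam k) (x k))
  (Hlam0 : Un_cv lam 0) (Hxb : forall i, (i < N)%nat -> Un_cv (fun k => x k i) (xb i)).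

Lemma ND_limit_in_Delta : in_Delta N xb.
Proof.
  intros i Hi. pose proof (fun k => ND_interior N pot (lam k) (x k) (Hlam k) (Hx k) i Hi).
  split; [apply (cv_le_lim _ _ 0 (Hxb i Hi))|apply (cv_lim_le _ _ 1 (Hxb i Hi))];
    intros k; specialize (H k); lra.
Qed.

Lemma ND_limit_gain_sign i : (i < N)%nat ->
  (0 < gain N pot i xb -> xb i = 1) /\ (gain N pot i xb < 0 -> xb i = 0).
Proof.
  intros Hi. pose proof (gain_cv N pot x xb i Hxb) as Hg.
  assert (Hbound : forall m, 0 < m -> Un_cv (fun k => lam k / m) 0)
    by (intros m Hm; unfold Rdiv; rewrite <- (Rmult_0_l (/ m)); apply CV_mult; auto using cv_const).
  split; intros Hs.
  - destruct (cv_eventually_gt _ _ (gain N pot i xb / 2) Hg ltac:(lra)) as [K HK].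
    assert (Hz : Un_cv (fun k => 1 - x k i) 0).
    { apply (cv_squeeze0 _ (fun k => lam k / (gain N pot i xb / 2))); [|apply Hbound; lra].
      exists K. intros k Hk. pose proof (ND_interior N pot _ _ (Hlam k) (Hx k) i Hi).
      rewrite Rabs_right by lra. apply (ND_one_sub_le N pot); auto; [lra|]. left; auto. }
    pose proof (UL_sequence _ _ _ Hz (CV_minus _ _ _ _ (cv_const 1) (Hxb i Hi))). lra.
  - destruct (cv_eventually_lt _ _ (gain N pot i xb / 2) Hg ltac:(lra)) as [K HK].
    apply (UL_sequence _ _ _ (Hxb i Hi)).
    apply (cv_squeeze0 _ (fun k => lam k / - (gain N pot i xb / 2))); [|apply Hbound; lra].
    exists K. intros k Hk. pose proof (ND_interior N pot _ _ (Hlam k) (Hx k) i Hi).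
    rewrite Rabs_right by lra. apply (ND_le N pot); auto; [lra|]. specialize (HK k Hk). lra.
Qed.

Lemma ND_limit_NE : is_NE N pot xb.
Proof. apply NE_of_gain_sign; auto using ND_limit_in_Delta, ND_limit_gain_sign. Qed.

Lemma ND_var_over_lam_cv0 i : (i < N)%nat -> gain N pot i xb <> 0 ->
  Un_cv (fun k => x k i * (1 - x k i) / lam k) 0.
Proof.
  intros Hi Hn. set (m := Rabs (gain N pot i xb) / 2).
  assert (Hm : 0 < m) by (unfold m; pose proof (Rabs_pos_lt _ Hn); lra).
  destruct (cv_eventually_gt _ _ m (cv_cvabs _ _ (gain_cv N pot x xb i Hxb))) as [K HK];
    [unfold m; pose proof (Rabs_pos_lt _ Hn); lra|].
  apply (cv_squeeze0 _ (fun k => (4 / (m * m)) * lam k)); [|apply cv_scal0; auto].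
  exists K. intros k Hk. specialize (Hlam k).
  pose proof (ND_interior N pot _ _ Hlam (Hx k) i Hi).
  pose proof (ND_var_le N pot _ _ Hlam (Hx k) i m Hi Hm ltac:(left; apply HK; auto)).
  rewrite Rabs_right by (apply Rle_ge, Rdiv_le_0_compat; nra).
  apply Rle_trans with (4 * (lam k * lam k) / (m * m) / lam k).
  - unfold Rdiv at 1 3. apply Rmult_le_compat_r; [left; apply Rinv_0_lt_compat|]; lra.
  - right. field. lra.
Qed.

(** With [d = x (1 - x)] and [S = hess / lam - I / d] we have [jac = diag(d) S]; at the
    test vector [g e_i + e_k] the quadratic form of [S] is [q n / lam n], where [q n -> 2 g^2]. *)
Lemma ND_eventually_unstable i k : mixing N xb i -> mixing N xb k -> hess N pot i k xb <> 0 ->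
  exists K, forall n, (K <= n)%nat -> ~ linearly_stable N (jac N pot (lam n) (x n)).
Proof.
  intros [Hi Hmi] [Hk Hmk] Hg. set (g := hess N pot i k xb) in Hg.
  assert (Hik : i <> k) by (intro E; subst k; unfold g in Hg; rewrite hess_diag in Hg; auto).
  set (d := fun n a => x n a * (1 - x n a)).
  set (q := fun n => 2 * (g * hess N pot i k (x n)) - lam n * (g * g * / d n i + / d n k)).
  assert (Hq : Un_cv q (2 * (g * g) - 0 * (g * g * / (xb i * (1 - xb i)) + / (xb k * (1 - xb k))))).
  { apply CV_minus; [apply CV_mult; [apply cv_const|apply CV_mult; [apply cv_const|apply hess_cv; auto]]|].
    apply CV_mult; auto. apply CV_plus; [apply CV_mult; [apply cv_const|]|];
      (apply cv_inv; [apply var_cv; auto|apply Rgt_not_eq; nra]). }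
  assert (Hgg : 0 < g * g) by (pose proof (Rsqr_pos_lt g Hg); unfold Rsqr in *; lra).
  destruct (cv_eventually_gt _ _ 0 Hq ltac:(lra)) as [K HK]. exists K. intros n Hn.
  specialize (HK n Hn). specialize (Hlam n).
  assert (Hd : forall a, (a < N)%nat -> 0 < d n a)
    by (intros a Ha; pose proof (ND_interior N pot _ _ Hlam (Hx n) a Ha); unfold d; nra).
  set (S := fun a b => hess N pot a b (x n) / lam n - (if Nat.eqb a b then 1 else 0) / d n a).
  apply (not_linearly_stable_of_indefinite N (d n) S); auto.
  - intros a b Ha Hb. unfold S. rewrite hess_sym.
    destruct (Nat.eqb_spec a b), (Nat.eqb_spec b a); subst; try congruence; unfold Rdiv; ring.
  - intros a b Ha Hb. unfold S, jac, d. pose proof (ND_interior N pot _ _ Hlam (Hx n) a Ha).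
    field. repeat split; lra.
  - exists (fun c => (if Nat.eqb c i then g else 0) + (if Nat.eqb c k then 1 else 0)).
    rewrite quad_two_units by auto. unfold S. rewrite !Nat.eqb_refl, !hess_diag, (hess_sym N pot k i).
    replace (Nat.eqb i k) with false by (symmetry; apply Nat.eqb_neq; auto).
    replace (Nat.eqb k i) with false by (symmetry; apply Nat.eqb_neq; auto).
    replace (g * g * (0 / lam n - 1 / d n i) + g * 1 * (hess N pot i k (x n) / lam n - 0 / d n i
             + (hess N pot i k (x n) / lam n - 0 / d n k)) + 1 * 1 * (0 / lam n - 1 / d n k))
      with (q n / lam n) by (unfold q; field; repeat split; try apply Rgt_not_eq, Hd; auto; lra).
    apply Rdiv_lt_0_compat; auto.
Qed.

Variables (w : nat -> nat -> R) (wb : nat -> R).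
Hypotheses (Hker : forall k a, (a < N)%nat -> fsum N (fun j => jac N pot (lam k) (x k) a j * w k j) = 0)
  (Hw1 : forall k, fsum N (fun j => Rabs (w k j)) = 1)
  (Hwb : forall j, (j < N)%nat -> Un_cv (fun k => w k j) (wb j)).

Lemma kernel_coord k a : (a < N)%nat ->
  w k a = x k a * (1 - x k a) / lam k * fsum N (fun j => hess N pot a j (x k) * w k j).
Proof. intros Ha. pose proof (Hker k a Ha) as E. rewrite jac_apply in E by auto. lra. Qed.

Lemma kernel_limit_pure_coord a : (a < N)%nat -> gain N pot a xb <> 0 -> wb a = 0.
Proof.
  intros Ha Hn. destruct (hess_bounded N pot) as [B [HB HBh]].
  apply (UL_sequence (fun k => w k a)); auto.
  apply (cv_squeeze0 _ (fun k => B * (x k a * (1 - x k a) / lam k)));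
    [|apply cv_scal0, ND_var_over_lam_cv0; auto].
  exists 0%nat. intros k _. rewrite kernel_coord, Rabs_mult, Rmult_comm by auto.
  pose proof (ND_interior N pot _ _ (Hlam k) (Hx k) a Ha). specialize (Hlam k).
  rewrite (Rabs_right (_ / lam k)) by (apply Rle_ge, Rdiv_le_0_compat; nra).
  apply Rmult_le_compat_r; [apply Rdiv_le_0_compat; nra|].
  rewrite <- (Rmult_1_r B), <- (Hw1 k). apply (fsum_matrix_bound N (fun a j => hess N pot a j (x k))).
  intros j Hj. apply HBh, Hx.
Qed.

Lemma kernel_limit_mixing_row a : mixing N xb a -> fsum N (fun j => hess N pot a j xb * wb j) = 0.
Proof.
  intros [Ha Hm]. set (D := xb a * (1 - xb a)). assert (HD : 0 < D) by (unfold D; nra).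
  apply (UL_sequence (fun k => fsum N (fun j => hess N pot a j (x k) * w k j))).
  - apply (fsum_cv N (fun k j => hess N pot a j (x k) * w k j)). intros j Hj.
    apply CV_mult; auto using hess_cv.
  - assert (Hc : Un_cv (fun k => lam k * w k a * / (x k a * (1 - x k a))) (0 * wb a * / D))
      by (apply CV_mult; [apply CV_mult; auto|apply cv_inv; [apply var_cv|]; auto; lra]).
    rewrite !Rmult_0_l in Hc.
    rewrite (functional_extensionality (fun k => fsum N (fun j => hess N pot a j (x k) * w k j))
      (fun k => lam k * w k a * / (x k a * (1 - x k a)))); auto.
    intros k. pose proof (ND_interior N pot _ _ (Hlam k) (Hx k) a Ha). specialize (Hlam k).
    rewrite (kernel_coord k a Ha). field. split; nra.
Qed.

End Vanishing_noise.

Section Regular_equilibrium.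

Variables (N : nat) (pot : (nat -> bool) -> R) (xb : nat -> R).
Hypothesis Hinv : restricted_hessian_invertible N pot xb.

Lemma restricted_hessian_injective v :
  (forall j, (j < N)%nat -> ~ mixing N xb j -> v j = 0) ->
  (forall i, mixing N xb i -> fsum N (fun j => hess N pot i j xb * v j) = 0) ->
  forall i, (i < N)%nat -> v i = 0.
Proof.
  intros Hv Hrow. destruct Hinv as [H [HH Hker]]. apply Hker; auto.
  intros i Hmi. rewrite <- (Hrow i Hmi). apply fsum_ext. intros j Hj.
  destruct (classic (mixing N xb j)) as [Hmj|Hmj].
  - rewrite (second_partial_U N pot i j xb (H i j) (proj1 Hmi) Hj (HH i j Hmi Hmj)). auto.
  - rewrite (Hv j Hj Hmj). ring.
Qed.

Lemma mixing_hess_column k : mixing N xb k -> exists i, mixing N xb i /\ hess N pot i k xb <> 0.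
Proof.
  intros Hk. apply NNPP; intro Hno.
  assert (H1 : (if Nat.eqb k k then 1 else 0) = 0); [|rewrite Nat.eqb_refl in H1; lra].
  apply (restricted_hessian_injective (fun j => if Nat.eqb j k then 1 else 0)); [| |apply Hk].
  - intros j Hj Hm. destruct (Nat.eqb_spec j k); subst; [contradiction|auto].
  - intros i Hi. rewrite (fsum_ext N _ (fun j => if Nat.eqb j k then hess N pot i k xb else 0)).
    + rewrite fsum_delta by apply Hk. apply NNPP; intro Hne. apply Hno. eauto.
    + intros j Hj. destruct (Nat.eqb_spec j k); subst; ring.
Qed.

End Regular_equilibrium.

Lemma singular_normalized_kernel N J : ~ nonsingular N J ->
  exists w, (forall a, (a < N)%nat -> fsum N (fun j => J a j * w j) = 0) /\ fsum N (fun j => Rabs (w j)) = 1.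
Proof.
  intros Hs. apply not_all_ex_not in Hs as [v Hv]. apply imply_to_and in Hv as [Hv1 Hv2].
  apply not_all_ex_not in Hv2 as [i0 Hi0]. apply imply_to_and in Hi0 as [Hi0 Hvi].
  set (s := fsum N (fun j => Rabs (v j))). pose proof (fsum_abs_pos N v i0 Hi0 Hvi) as Hs. fold s in Hs.
  exists (fun j => / s * v j). split.
  - intros a Ha. rewrite (fsum_ext N _ (fun j => / s * (J a j * v j))) by (intros; ring).
    rewrite fsum_scal, Hv1 by auto. ring.
  - rewrite (fsum_ext N _ (fun j => / s * Rabs (v j))).
    + rewrite fsum_scal. fold s. field. lra.
    + intros j Hj. rewrite Rabs_mult, Rabs_right; auto. left; apply Rinv_0_lt_compat; auto.
Qed.

Lemma nonmixing_gain_nonzero N pot xb a : quasi_strict N pot xb -> in_Delta N xb -> (a < N)%nat ->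
  ~ mixing N xb a -> gain N pot a xb <> 0.
Proof.
  intros Hqs HD Ha Hma. destruct (Hqs a Ha) as [Q1 Q0]. unfold gain.
  destruct (HD a Ha) as [[A1|A1] [A2|A2]].
  - exfalso. apply Hma. split; auto.
  - specialize (Q1 A2). lra.
  - specialize (Q0 (eq_sym A1)). lra.
  - lra.
Qed.

Lemma ND_eventually_nonsingular N pot (lam : nat -> R) (x : nat -> nat -> R) xb :
  (forall k, 0 < lam k) -> (forall k, is_ND N pot (lam k) (x k)) -> Un_cv lam 0 ->
  (forall i, (i < N)%nat -> Un_cv (fun k => x k i) (xb i)) -> regular_NE N pot xb ->
  exists K, forall n, (K <= n)%nat -> nonsingular N (jac N pot (lam n) (x n)).
Proof.
  intros Hlam Hx Hlam0 Hxb [Hqs Hinv]. apply NNPP; intro Hn.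
  destruct (subseq_select (fun _ n => ~ nonsingular N (jac N pot (lam n) (x n)))) as [psi [Hpsi Hsing]].
  { intros _ K. apply NNPP; intro HK. apply Hn. exists K. intros n Hn'.
    apply NNPP; intro Hs. apply HK. eauto. }
  assert (Hw := fun m => singular_normalized_kernel N _ (Hsing m)).
  set (w := fun m => proj1_sig (constructive_indefinite_description _ (Hw m))).
  assert (Hwm : forall m,
    (forall a, (a < N)%nat -> fsum N (fun j => jac N pot (lam (psi m)) (x (psi m)) a j * w m j) = 0)
    /\ fsum N (fun j => Rabs (w m j)) = 1)
    by (intros m; unfold w; destruct constructive_indefinite_description; auto).
  destruct (bolzano_weierstrass_vec N w 1) as [rho [Hrho [wb Hwb]]].
  { intros m a Ha. rewrite <- (proj2 (Hwm m)). apply (fsum_term_le N (fun j => Rabs (w m j))); auto.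
    intros; apply Rabs_pos. }
  set (sub := fun m => psi (rho m)). assert (Hsub : incr sub) by (unfold sub; apply incr_comp; auto).
  assert (Hxsub : forall i, (i < N)%nat -> Un_cv (fun m => x (sub m) i) (xb i))
    by (intros i Hi; apply (cv_subseq (fun k => x k i)); auto).
  assert (Hlsub : Un_cv (fun m => lam (sub m)) 0) by (apply cv_subseq; auto).
  assert (HD : in_Delta N xb)
    by (apply (ND_limit_in_Delta N pot (fun m => lam (sub m)) (fun m => x (sub m))); auto).
  assert (Hw0 : forall i, (i < N)%nat -> wb i = 0).
  { apply (restricted_hessian_injective N pot xb Hinv).
    - intros j Hj Hmj.
      apply (kernel_limit_pure_coord N pot) with (lam := fun m => lam (sub m)) (x := fun m => x (sub m))
        (xb := xb) (w := fun m => w (rho m)); auto; try (intros; apply Hwm; auto).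
      apply nonmixing_gain_nonzero; auto.
    - intros i Hmi.
      apply (kernel_limit_mixing_row N pot) with (lam := fun m => lam (sub m)) (x := fun m => x (sub m))
        (w := fun m => w (rho m)); auto; intros; apply Hwm; auto. }
  assert (Hsum : fsum N (fun j => Rabs (wb j)) = 1).
  { apply (UL_sequence (fun m => fsum N (fun j => Rabs (w (rho m) j)))).
    - apply (fsum_cv N (fun m j => Rabs (w (rho m) j))). intros j Hj. apply cv_cvabs, Hwb; auto.
    - rewrite (functional_extensionality _ (fun _ => 1)) by (intros m; apply Hwm). apply cv_const. }
  rewrite fsum_zero in Hsum; [lra|]. intros j Hj. rewrite Hw0 by auto. apply Rabs_R0.
Qed.

Lemma small_parameter_counterexamples (P Q : R -> (nat -> R) -> Prop) :
  ~ (exists lam0, 0 < lam0 /\ forall lam, 0 < lam < lam0 -> forall x, P lam x -> Q lam x) ->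
  exists (l : nat -> R) (y : nat -> nat -> R),
    forall n, 0 < l n < / (INR n + 1) /\ P (l n) (y n) /\ ~ Q (l n) (y n).
Proof.
  intros Hno.
  assert (H : forall n : nat, exists ly : R * (nat -> R),
             0 < fst ly < / (INR n + 1) /\ P (fst ly) (snd ly) /\ ~ Q (fst ly) (snd ly)).
  { intros n. apply NNPP; intro Hn. apply Hno. exists (/ (INR n + 1)).
    split; [apply Rinv_0_lt_compat; pose proof (pos_INR n); lra|].
    intros lam Hl x HP. apply NNPP; intro HQ. apply Hn. exists (lam, x). auto. }
  set (ly := fun n => proj1_sig (constructive_indefinite_description _ (H n))).
  exists (fun n => fst (ly n)), (fun n => snd (ly n)). intros n.
  unfold ly. destruct constructive_indefinite_description; auto.
Qed.

Lemma dist1_cv N (s : nat -> nat -> R) l p : (forall i, (i < N)%nat -> Un_cv (fun k => s k i) (l i)) ->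
  Un_cv (fun k => dist1 N (s k) p) (dist1 N l p).
Proof.
  intros H. apply (fsum_cv N (fun k i => Rabs (s k i - p i))). intros i Hi.
  apply (cv_cvabs (fun k => s k i - p i)). apply CV_minus; auto using cv_const.
Qed.

Lemma not_pure_mixing N x : in_Delta N x -> ~ is_pure N x -> exists k, mixing N x k.
Proof.
  intros HD Hnp. apply not_all_ex_not in Hnp as [k Hk]. apply imply_to_and in Hk as [Hk Hkm].
  exists k. split; auto. destruct (HD k Hk) as [[A1|A1] [A2|A2]]; auto; exfalso; apply Hkm; auto.
Qed.

(** Away from the pure equilibria, Nash distributions for small [lam] are close to mixed
    equilibria, where the Jacobian has an eigenvalue of order [1 / lam]. *)
Lemma far_from_pure_NE_regime N pot delta : regular_potential_game N pot -> 0 < delta ->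
  exists lamM, 0 < lamM /\ forall lam, 0 < lam < lamM -> forall x, is_ND N pot lam x ->
    (forall p, pure_NE N pot p -> 2 * delta < dist1 N x p) ->
    nonsingular N (jac N pot lam x) /\ ~ linearly_stable N (jac N pot lam x).
Proof.
  intros Hreg Hd. apply NNPP; intro Hno.
  destruct (small_parameter_counterexamples
    (fun lam x => is_ND N pot lam x /\ forall p, pure_NE N pot p -> 2 * delta < dist1 N x p)
    (fun lam x => nonsingular N (jac N pot lam x) /\ ~ linearly_stable N (jac N pot lam x)))
    as [l [y Hly]].
  { intros [lam0 [H0 H]]. apply Hno. exists lam0. split; auto. }
  destruct (bolzano_weierstrass_vec N y 1) as [phi [Hphi [xb Hxb]]].
  { intros k i Hi.
    pose proof (ND_interior N pot _ _ (proj1 (proj1 (Hly k))) (proj1 (proj1 (proj2 (Hly k)))) i Hi).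
    rewrite Rabs_right; lra. }
  set (L := fun k => l (phi k)). set (X := fun k => y (phi k)).
  assert (HL : forall k, 0 < L k) by (intros k; apply (Hly (phi k))).
  assert (HX : forall k, is_ND N pot (L k) (X k)) by (intros k; apply (Hly (phi k))).
  assert (HL0 : Un_cv L 0) by (apply (cv_subseq_inv_succ l phi Hphi); intros n; apply Hly).
  assert (HNE : is_NE N pot xb) by (apply (ND_limit_NE N pot L X); auto).
  assert (Hnp : ~ is_pure N xb).
  { intros Hp. assert (2 * delta <= dist1 N xb xb); [|rewrite dist1_self in *; lra].
    apply (cv_le_lim _ _ _ (dist1_cv N X xb xb Hxb)). intros k. left. apply (Hly (phi k)). split; auto. }
  destruct (not_pure_mixing N xb (proj1 HNE) Hnp) as [k0 Hk0].
  destruct (Hreg xb HNE) as [Hqs Hinv].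
  destruct (mixing_hess_column N pot xb Hinv k0 Hk0) as [i [Hi Hik]].
  destruct (ND_eventually_unstable N pot L X xb HL HX HL0 Hxb i k0 Hi Hk0 Hik) as [K1 HK1].
  destruct (ND_eventually_nonsingular N pot L X xb HL HX HL0 Hxb (Hreg xb HNE)) as [K2 HK2].
  apply (proj2 (proj2 (Hly (phi (K1 + K2)%nat)))). split; [apply HK2|apply HK1]; lia.
Qed.

Lemma near_pure_lam_threshold n c delta B lam1 : 0 < c -> 0 < delta -> 0 <= B -> 0 < lam1 ->
  exists lamP, 0 < lamP <= lam1 /\ INR n * (2 * lamP / c) <= delta / 2 /\
    INR n * (16 * lamP * B / (c * c)) < 1.
Proof.
  intros Hc Hd HB Hl. pose proof (pos_INR n) as Hn.
  set (a := c * delta / (4 * (INR n + 1))). set (b := c * c / (16 * (B + 1) * (INR n + 1))).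
  assert (0 < a) by (apply Rdiv_lt_0_compat; [apply Rmult_lt_0_compat|]; lra).
  assert (0 < b) by (apply Rdiv_lt_0_compat; [apply Rmult_lt_0_compat|apply Rmult_lt_0_compat]; lra).
  pose proof (Rmin_l lam1 (Rmin a b)). pose proof (Rmin_r lam1 (Rmin a b)).
  pose proof (Rmin_l a b). pose proof (Rmin_r a b).
  set (lamP := Rmin lam1 (Rmin a b)) in *.
  assert (Hpos : 0 < lamP) by (repeat apply Rmin_pos; auto).
  assert (Ha : lamP * (4 * (INR n + 1)) <= c * delta).
  { apply Rle_trans with (a * (4 * (INR n + 1))); [apply Rmult_le_compat_r; lra|].
    unfold a. right. field. lra. }
  assert (Hb : lamP * (16 * (B + 1) * (INR n + 1)) <= c * c).
  { apply Rle_trans with (b * (16 * (B + 1) * (INR n + 1))); [apply Rmult_le_compat_r; nra|].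
    unfold b. right. field. split; lra. }
  exists lamP. split; [lra|split].
  - apply Rmult_le_reg_r with c; auto.
    replace (INR n * (2 * lamP / c) * c) with (2 * INR n * lamP) by (field; lra).
    nra.
  - apply Rmult_lt_reg_r with (c * c); [nra|].
    replace (INR n * (16 * lamP * B / (c * c)) * (c * c)) with (16 * INR n * lamP * B) by (field; lra).
    nra.
Qed.

Lemma near_pure_NE_thresholds N pot lam1 branch :
  regular_potential_game N pot -> is_branch_system N pot lam1 branch ->
  exists delta lamP, 0 < delta /\ 0 < lamP /\
    forall lam, 0 < lam < lamP -> forall x, is_ND N pot lam x ->
      ((exists p, pure_NE N pot p /\ dist1 N x p <= 2 * delta) ->
         nonsingular N (jac N pot lam x) /\ linearly_stable N (jac N pot lam x) /\
         pure_ND N pot branch lam x) /\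
      ((forall p, pure_NE N pot p -> 2 * delta < dist1 N x p) -> ~ pure_ND N pot branch lam x).
Proof.
  intros Hreg Hbr. assert (Hlam1 : 0 < lam1) by apply Hbr.
  destruct (pure_gain_gap N pot) as [c [Hc Hc_gap]].
  destruct (gain_lipschitz N pot) as [L [HL HL_lip]].
  destruct (hess_bounded N pot) as [B [HB HB_hess]].
  set (delta := c / (4 * L)).
  assert (Hdelta : 0 < delta) by (apply Rdiv_lt_0_compat; lra).
  assert (HLdelta : 4 * L * delta <= c) by (unfold delta; right; field; lra).
  destruct (near_pure_lam_threshold N c delta B lam1) as [lamP [HlamP [HlamP_dist HlamP_jac]]]; auto.
  exists delta, lamP. split; [auto|split; [lra|]]. intros lam Hl x Hx. split.
  - intros [p [Hp Hd]].
    apply near_pure_NE_regime with (c := c) (L := L) (B := B) (delta := delta) (lamP := lamP)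
      (p := p) (lam1 := lam1); auto; lra.
  - apply far_from_pure_NE_not_pure_ND with (c := c) (L := L) (lamP := lamP) (lam1 := lam1); auto; lra.
Qed.

Theorem proposition1 (N : nat) (u : nat -> (nat -> bool) -> R)
  (pot : (nat -> bool) -> R)
  (Hpot : is_potential N u pot)
  (Hreg : regular_potential_game N pot)
  (lam1 : R) (branch : (nat -> R) -> R -> (nat -> R))
  (Hbr : is_branch_system N pot lam1 branch) :
  exists lam0, 0 < lam0 /\
    forall lam, 0 < lam < lam0 ->
      forall x, is_ND N pot lam x ->
        forall J, is_jacobian N pot lam x J ->
          nonsingular N J /\
          (linearly_stable N J <-> pure_ND N pot branch lam x).
Proof.
  destruct (near_pure_NE_thresholds N pot lam1 branch Hreg Hbr) as [delta [lamP [Hd [HlP Hnear]]]].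
  destruct (far_from_pure_NE_regime N pot delta Hreg Hd) as [lamM [HlM Hfar]].
  exists (Rmin lamP lamM). split; [apply Rmin_pos; auto|].
  intros lam Hl x Hx J HJ. pose proof (Rmin_l lamP lamM). pose proof (Rmin_r lamP lamM).
  assert (HJjac : forall i j, (i < N)%nat -> (j < N)%nat -> J i j = jac N pot lam x i j)
    by (apply jacobian_at_ND; auto; lra).
  rewrite (nonsingular_ext N _ _ HJjac), (linearly_stable_ext N _ _ HJjac).
  destruct (Hnear lam ltac:(lra) x Hx) as [Hclose Haway].
  destruct (classic (exists p, pure_NE N pot p /\ dist1 N x p <= 2 * delta)) as [Hp|Hp].
  - destruct (Hclose Hp) as [NS [ST PN]]. tauto.
  - assert (Hall : forall p, pure_NE N pot p -> 2 * delta < dist1 N x p)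
      by (intros p Hpp; apply Rnot_le_lt; intro Hle; apply Hp; eauto).
    destruct (Hfar lam ltac:(lra) x Hx Hall) as [NS NST]. specialize (Haway Hall). tauto.
Qed.
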